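(* Let $\mathcal{L}_\to\subseteq\{\land,\lor,\to,\lnot,0,1\}$ be a language containing $\to$ and $\Phi$ a Sahlqvist quasiequation in $\mathcal{L}_\to$. For every $\mathcal{L}_\to$-subreduct $\boldsymbol{A}$ of a Heyting algebra: $\boldsymbol{A}\vDash\mathsf{A}(\Phi)$ if and only if $\boldsymbol{B}_\ast\vDash\mathsf{tr}(\Phi)$ for every $\boldsymbol{B}\in\mathbb{V}(\boldsymbol{A})$.
   Context: An $\mathcal{L}_\to$-subreduct of a Heyting algebra is a subalgebra of its $\mathcal{L}_\to$-reduct; $\mathbb{V}(\boldsymbol{A})$ is the variety generated by $\boldsymbol{A}$. In such an algebra $x\to x$ is constant with value $1$; a formula $\varphi$ is valid in $\boldsymbol{A}$ if $\boldsymbol{A}\vDash\varphi\approx1$, and $\boldsymbol{A}\vDash S$ for a set $S$ of formulas means every member is valid. An implicative filter of $\boldsymbol{A}$ is $F\subseteq A$ with $1\in F$ and $a,a\to b\in F\Rightarrow b\in F$; $\boldsymbol{A}_\ast$ is the poset under inclusion of meet irreducible implicative filters (proper, and not the intersection of two implicative filters both different from it). Sahlqvist quasiequations: formulas over variables with $\land,\lor,\to,\lnot,0,1$; a variable occurrence is positive (negative) if the number of negations and implication antecedents in whose scope it lies is even (odd); positive/negative formulas have all occurrences so. Sahlqvist antecedent: built from variables, negative formulas, $0,1$ by $\land,\lor$. Sahlqvist implication: positive formula, or $\lnot\varphi$ with $\varphi$ a Sahlqvist antecedent, or $\varphi\to\psi$ with $\varphi$ a Sahlqvist antecedent and $\psi$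 positive. $\Phi=\varphi_1\land y\le z\,\&\cdots\&\,\varphi_m\land y\le z\Longrightarrow y\le z$, $y,z$ distinct variables not occurring in the $\varphi_i$, each $\varphi_i$ built from Sahlqvist implications by $\land,\lor$; $a\le b$ means $a\land b\approx a$; $\Phi$ is in $\mathcal{L}_\to$ if the $\varphi_i$ only use symbols from $\mathcal{L}_\to$. For each such formula $\varphi(x_1..x_n)$ and $k\ge1$, $\boldsymbol{\varphi}^k$ is the finite set of $\mathsf{IPC}$ formulas defined by: $\boldsymbol{x_m}^k=\{x_m^1..x_m^k\}$; $\boldsymbol{1}^k=\{\top(x_1^1)\}$ with $\top(x)=x\to x$; $\boldsymbol{0}^k=\{x_1^1, x_1^1\to0\}$; $(\boldsymbol{\psi\land\chi})^k=\boldsymbol{\psi}^k\cup\boldsymbol{\chi}^k$; with $\boldsymbol{\psi}^k=\{\psi_1..\psi_p\}$, $\boldsymbol{\chi}^k=\{\chi_1..\chi_t\}$: $(\boldsymbol{\lnot\psi})^k=\{\psi_1\to(\psi_2\to(\cdots(\psi_p\to0)\cdots))\}$, $(\boldsymbol{\psi\to\chi})^k=\{\psi_1\to(\cdots(\psi_p\to\chi_j)\cdots):j\le t\}$, $(\boldsymbol{\psi\lor\chi})^k=\{\psi_i\lor\chi_j:i\le p,j\le t\}$. For a finite set $\Gamma=\{\gamma_1..\gamma_n\}$ and formula $\varphi$, $\Gamma\to\varphi$ denotes $\{\gamma_1\to(\gamma_2\to(\cdots(\gamma_n\to\varphi)\cdots))\}$ (and for a union of such singletons $\Sigma$, $\Sigma\to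 y$ is defined likewise). Then $\mathsf{A}(\Phi)=\bigcup_{k\ge1}\big(((\boldsymbol{\varphi_1}^k\to y)\cup\cdots\cup(\boldsymbol{\varphi_m}^k\to y))\to y\big)$, with $y$ a variable not occurring in the $\boldsymbol{\varphi_i}^k$. $\mathsf{Up}(\mathbb{X})$ is the Heyting algebra of upsets of a poset ($\cap,\cup$, $U\to V=X\smallsetminus{\downarrow}(U\smallsetminus V)$, $\emptyset$, $X$), and $\mathsf{tr}(\Phi)$ is the effectively computable first-order sentence in the language of posets such that for every poset $\mathbb{X}$, $\mathsf{Up}(\mathbb{X})\vDash\Phi$ iff $\mathbb{X}\vDash\mathsf{tr}(\Phi)$. *)

From Stdlib Require Import List.
From mathcomp Require Import all_boot.
Set Implicit Arguments. Unset Strict Implicit. Unset Printing Implicit Defensive.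

Inductive fm : Type :=
| Var of nat
| And of fm & fm
| Or  of fm & fm
| Imp of fm & fm
| Neg of fm
| Zero
| One.

(* A language L_-> : a subset of {and,or,->,not,0,1} containing ->.
   The implication is always present; the other symbols are flagged. *)
Record lang := Lang {
  has_and : bool; has_or : bool; has_neg : bool; has_zero : bool; has_one : bool }.

Fixpoint in_lang (L : lang) (phi : fm) : bool :=
  match phi with
  | Var _ => true
  | And a b => has_and L && in_lang L a && in_lang L b
  | Or a b => has_or L && in_lang L a && in_lang L b
  | Imp a b => in_lang L a && in_lang L b
  | Neg a => has_neg L && in_lang L a
  | Zero => has_zero L
  | One => has_one L
  end.

Fixpoint occurs (n : nat) (phi : fm) : bool :=
  match phi with
  | Var m => m == n
  | And a b | Or a b | Imp a b => occurs n a || occurs n b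
  | Neg a => occurs n a
  | Zero | One => false
  end.

Fixpoint positive (phi : fm) : bool :=
  match phi with
  | Var _ => true
  | And a b | Or a b => positive a && positive b
  | Imp a b => negative a && positive b
  | Neg a => negative a
  | Zero | One => true
  end
with negative (phi : fm) : bool :=
  match phi with
  | Var _ => false
  | And a b | Or a b => negative a && negative b
  | Imp a b => positive a && negative b
  | Neg a => positive a
  | Zero | One => true
  end.

Fixpoint sahl_ante (phi : fm) : bool :=
  negative phi ||
  match phi with
  | Var _ | Zero | One => true
  | And a b | Or a b => sahl_ante a && sahl_ante b
  | _ => false
  end.

Definition sahl_imp (phi : fm) : bool :=
  positive phi ||
  match phi with
  | Neg a => sahl_ante a
  | Imp a b => sahl_ante a && positive b
  | _ => false
  end.

Fixpoint sahl_body (phi : fm) : bool :=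
  sahl_imp phi ||
  match phi with
  | And a b | Or a b => sahl_body a && sahl_body b
  | _ => false
  end.

(* A Sahlqvist quasiequation
     phi_1 /\ y <= z & ... & phi_m /\ y <= z  ==>  y <= z
   is represented by the list [phi_1; ...; phi_m] and the variables y, z. *)
Record quasi := Quasi { q_phis : seq fm; q_y : nat; q_z : nat }.

Definition sahlqvist_quasi_in (L : lang) (Q : quasi) : Prop :=
  [/\ 0 < size (q_phis Q),
      q_y Q != q_z Q,
      all (fun phi => ~~ occurs (q_y Q) phi && ~~ occurs (q_z Q) phi) (q_phis Q),
      all sahl_body (q_phis Q)
    & all (in_lang L) (q_phis Q)].

(* the variable x_m^j (fresh copies); all of them are different from
   variable 0, which is used as the fresh variable y of A(Phi). *)
Definition copy (m j : nat) : nat := 2 ^ m * (2 * j + 1).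

Fixpoint trk (k : nat) (phi : fm) : seq fm :=
  match phi with
  | Var m => [seq Var (copy m j) | j <- iota 1 k]
  | One => [:: Imp (Var (copy 0 1)) (Var (copy 0 1))]
  | Zero => [:: Var (copy 0 1); Imp (Var (copy 0 1)) Zero]
  | And a b => trk k a ++ trk k b
  | Neg a => [:: foldr Imp Zero (trk k a)]
  | Imp a b => [seq foldr Imp chi (trk k a) | chi <- trk k b]
  | Or a b => [seq Or psi chi | psi <- trk k a, chi <- trk k b]
  end.

(* the unique member of  ((phi_1^k -> y) u ... u (phi_m^k -> y)) -> y *)
Definition A_form (Q : quasi) (k : nat) : fm :=
  let y := Var 0 in
  foldr Imp y [seq foldr Imp y (trk k phi) | phi <- q_phis Q].

Definition A_set (Q : quasi) (theta : fm) : Prop :=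
  exists2 k, 0 < k & theta = A_form Q k.

Record heyting := Heyting {
  hcar :> Type;
  hle : hcar -> hcar -> Prop;
  hmeet : hcar -> hcar -> hcar;
  hjoin : hcar -> hcar -> hcar;
  himp : hcar -> hcar -> hcar;
  hbot : hcar;
  htop : hcar;
  hle_refl : forall a, hle a a;
  hle_trans : forall a b c, hle a b -> hle b c -> hle a c;
  hle_anti : forall a b, hle a b -> hle b a -> a = b;
  hmeetP : forall a b c, hle c (hmeet a b) <-> (hle c a /\ hle c b);
  hjoinP : forall a b c, hle (hjoin a b) c <-> (hle a c /\ hle b c);
  hbotP : forall a, hle hbot a;
  htopP : forall a, hle a htop;
  himpP : forall a b c, hle (hmeet a b) c <-> hle a (himp b c) }.

Fixpoint heval (H : heyting) (v : nat -> H) (phi : fm) : H :=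
  match phi with
  | Var n => v n
  | And a b => hmeet (heval v a) (heval v b)
  | Or a b => hjoin (heval v a) (heval v b)
  | Imp a b => himp (heval v a) (heval v b)
  | Neg a => himp (heval v a) (hbot H)
  | Zero => hbot H
  | One => htop H
  end.

Definition subreduct (L : lang) (H : heyting) (S : H -> Prop) : Prop :=
  (exists a, S a) /\
  (forall a b, S a -> S b -> S (himp a b)) /\
  (has_and L -> forall a b, S a -> S b -> S (hmeet a b)) /\
  (has_or L -> forall a b, S a -> S b -> S (hjoin a b)) /\
  (has_neg L -> forall a, S a -> S (himp a (hbot H))) /\
  (has_zero L -> S (hbot H)) /\
  (has_one L -> S (htop H)).

Definition sub_valid (H : heyting) (S : H -> Prop) (phi : fm) : Prop :=
  forall v : nat -> H, (forall n, S (v n)) -> heval v phi = htop H.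

Record lalg := LAlg {
  acar :> Type;
  aimp : acar -> acar -> acar;
  aand : option (acar -> acar -> acar);
  aor : option (acar -> acar -> acar);
  aneg : option (acar -> acar);
  azero : option acar;
  aone : option acar }.

Definition has_sig (L : lang) (B : lalg) : Prop :=
  [/\ isSome (aand B) = has_and L, isSome (aor B) = has_or L,
      isSome (aneg B) = has_neg L, isSome (azero B) = has_zero L
    & isSome (aone B) = has_one L].

(* B is in V(A), A the L-subreduct S of H: B is a homomorphic image (under f)
   of a subalgebra P of a power A^I (elements of A^I are maps I -> H with
   values in S, operations pointwise). *)
Definition in_variety (L : lang) (H : heyting) (S : H -> Prop) (B : lalg) : Prop :=
  has_sig L B /\
  exists (I : Type) (P : (I -> H) -> Prop) (f : (I -> H) -> B),
  (forall x, P x -> forall i, S (x i)) /\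
  (forall x y, P x -> P y ->
        P (fun i => himp (x i) (y i)) /\
        f (fun i => himp (x i) (y i)) = aimp (f x) (f y)) /\
  (forall g, aand B = Some g -> forall x y, P x -> P y ->
        P (fun i => hmeet (x i) (y i)) /\
        f (fun i => hmeet (x i) (y i)) = g (f x) (f y)) /\
  (forall g, aor B = Some g -> forall x y, P x -> P y ->
        P (fun i => hjoin (x i) (y i)) /\
        f (fun i => hjoin (x i) (y i)) = g (f x) (f y)) /\
  (forall g, aneg B = Some g -> forall x, P x ->
        P (fun i => himp (x i) (hbot H)) /\
        f (fun i => himp (x i) (hbot H)) = g (f x)) /\
  (forall d, azero B = Some d ->
        P (fun _ => hbot H) /\ f (fun _ => hbot H) = d) /\
  (forall d, aone B = Some d ->
        P (fun _ => htop H) /\ f (fun _ => htop H) = d) /\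
  (forall b : B, exists2 x, P x & f x = b).

(* 1 = a -> a (constant in such algebras) *)
Definition impl_filter (B : lalg) (F : B -> Prop) : Prop :=
  (forall a : B, F (aimp a a)) /\
  (forall a b : B, F a -> F (aimp a b) -> F b).

Definition meet_irr_filter (B : lalg) (F : B -> Prop) : Prop :=
  [/\ impl_filter F,
      exists b : B, ~ F b
    & forall G1 G2 : B -> Prop, impl_filter G1 -> impl_filter G2 ->
        (forall x, F x <-> (G1 x /\ G2 x)) ->
        (forall x, G1 x <-> F x) \/ (forall x, G2 x <-> F x)].

Definition filt_star (B : lalg) : Type := {F : B -> Prop | meet_irr_filter F}.

Definition filt_le (B : lalg) (F G : filt_star B) : Prop :=
  forall x, proj1_sig F x -> proj1_sig G x.

Definition upset (X : Type) (le : X -> X -> Prop) (U : X -> Prop) : Prop :=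
  forall x y, le x y -> U x -> U y.

Fixpoint upeval (X : Type) (le : X -> X -> Prop) (v : nat -> X -> Prop)
    (phi : fm) : X -> Prop :=
  match phi with
  | Var n => v n
  | And a b => fun x => upeval le v a x /\ upeval le v b x
  | Or a b => fun x => upeval le v a x \/ upeval le v b x
  | Imp a b => fun x => forall y, le x y -> upeval le v a y -> upeval le v b y
  | Neg a => fun x => forall y, le x y -> ~ upeval le v a y
  | Zero => fun _ => False
  | One => fun _ => True
  end.

Definition Up_sat_quasi (X : Type) (le : X -> X -> Prop) (Q : quasi) : Prop :=
  forall v : nat -> X -> Prop, (forall n, upset le (v n)) ->
    (forall phi, In phi (q_phis Q) ->
       forall x, upeval le v phi x /\ v (q_y Q) x -> v (q_z Q) x) ->
    forall x, v (q_y Q) x -> v (q_z Q) x.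

(* X |= tr(Phi) : by definition of tr, equivalent to Up(X) |= Phi *)
Definition sat_tr (X : Type) (le : X -> X -> Prop) (Q : quasi) : Prop :=
  Up_sat_quasi le Q.

(* An algebra B of type L is represented by the poset B_* of its
   meet-irreducible implicative filters. For lists [l m] of elements, the
   valuation sending [m] to the points containing [l m] makes a formula true at
   a point exactly when the point contains the list of elements built from the
   formula as phi^k is built from phi (truth lemma [upeval_cval]).

   If A validates A(Phi), so does every B in V(A). A point of B_* refuting Phi
   refutes every phi_i; as the phi_i are Sahlqvist, it does so under the
   valuation generated by finitely many points, i.e. by intersections of
   filters, and by compactness (Esakia's lemma) already under a valuation
   given by finite lists. Reading these lists as values of the copies x_m^j,
   and y as an upper bound of refuting elements, contradicts A(Phi).

   Conversely, if a member of A(Phi) fails in A, a meet-irreducible filter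
   omits its value, and a point G above it containing the values of the
   phi_i^k -> y but not y refutes Phi under the valuation y := upset of G,
   z := complement of the downset of G, x_m := points containing its copies. *)

From Stdlib Require Import List.
From mathcomp Require Import all_boot zify boolp.
From mathcomp Require classical_sets.
Set Implicit Arguments. Unset Strict Implicit. Unset Printing Implicit Defensive.

Section HeytingFacts.
Variable H : heyting.
Local Notation le := (@hle H).

Lemma hle_meetl (a b : H) : le (hmeet a b) a.
Proof. by have /hmeetP [] := hle_refl (hmeet a b). Qed.

Lemma hle_meetr (a b : H) : le (hmeet a b) b.
Proof. by have /hmeetP [] := hle_refl (hmeet a b). Qed.

Lemma hle_meet (a b c : H) : le c a -> le c b -> le c (hmeet a b).
Proof. by move=> ? ?; apply/hmeetP. Qed.

Lemma hle_joinl (a b : H) : le a (hjoin a b).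
Proof. by have /hjoinP [] := hle_refl (hjoin a b). Qed.

Lemma hle_joinr (a b : H) : le b (hjoin a b).
Proof. by have /hjoinP [] := hle_refl (hjoin a b). Qed.

Lemma hle_himp (a b c : H) : le (hmeet c a) b -> le c (himp a b).
Proof. by move/himpP. Qed.

Lemma hle_mp (c a b : H) : le c a -> le c (himp a b) -> le c b.
Proof.
move=> ca cab; apply: hle_trans (_ : le (hmeet (himp a b) a) b).
  exact: hle_meet.
by apply/himpP; apply: hle_refl.
Qed.

Lemma htop_le_eq (x : H) : le (htop H) x -> x = htop H.
Proof. by move=> h; apply: hle_anti => //; apply: htopP. Qed.

Lemma himp_top (a b : H) : le a b -> himp a b = htop H.
Proof. by move=> ab; apply/htop_le_eq/hle_himp; apply: hle_trans (hle_meetr _ _) ab. Qed.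

Lemma himp_refl (a : H) : himp a a = htop H.
Proof. exact/himp_top/hle_refl. Qed.

Lemma himpT_top (b : H) : himp (htop H) b = htop H -> b = htop H.
Proof.
move=> h; apply: htop_le_eq; apply: (@hle_mp _ (htop H)); first exact: hle_refl.
by rewrite h; apply: hle_refl.
Qed.

Lemma himpK (a b : H) : himp a (himp b a) = htop H.
Proof. by apply/himp_top/hle_himp; apply: hle_meetl. Qed.

Lemma himpS (t a b : H) :
  himp (himp t (himp a b)) (himp (himp t a) (himp t b)) = htop H.
Proof.
apply/himp_top/hle_himp/hle_himp; set c := hmeet _ _.
have ct : le c t by exact: hle_meetr.
have ctab : le c (himp t (himp a b)) by apply: hle_trans (hle_meetl _ _) (hle_meetl _ _).
have cta : le c (himp t a) by apply: hle_trans (hle_meetl _ _) (hle_meetr _ _).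
by apply: (@hle_mp _ a); [apply: hle_mp cta | apply: hle_mp ctab].
Qed.

Lemma himp_weaken_refl (t a : H) : himp t (himp a a) = htop H.
Proof. by rewrite himp_refl; apply/himp_top/htopP. Qed.

Lemma himp_joinl (a b : H) : himp a (hjoin a b) = htop H.
Proof. exact/himp_top/hle_joinl. Qed.

Lemma himp_joinr (a b : H) : himp b (hjoin a b) = htop H.
Proof. exact/himp_top/hle_joinr. Qed.

Lemma himp_join_elim (a b c : H) :
  himp (himp a c) (himp (himp b c) (himp (hjoin a b) c)) = htop H.
Proof.
apply/himp_top/hle_himp/hle_himp.
have swap : le (hmeet (hmeet (himp a c) (himp b c)) (hjoin a b))
                (hmeet (hjoin a b) (hmeet (himp a c) (himp b c))).
  by apply: hle_meet; [apply: hle_meetr | apply: hle_meetl].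
apply: hle_trans swap _; apply/himpP/hjoinP; split; apply/himpP.
- apply: (@hle_mp _ a); first exact: hle_meetl.
  by apply: hle_trans (hle_meetr _ _) _; apply: hle_meetl.
- apply: (@hle_mp _ b); first exact: hle_meetl.
  by apply: hle_trans (hle_meetr _ _) _; apply: hle_meetr.
Qed.

Lemma himp_neg_elim (a b : H) : himp a (himp (himp a (hbot H)) b) = htop H.
Proof.
apply/himp_top/hle_himp; apply: hle_trans _ (hbotP b).
by apply: (@hle_mp _ a); [apply: hle_meetl | apply: hle_meetr].
Qed.

Lemma himp_neg_absorb (a : H) :
  himp (himp a (himp a (hbot H))) (himp a (hbot H)) = htop H.
Proof.
apply/himp_top/hle_himp.
by apply: (@hle_mp _ a); [apply: hle_meetr | apply: hle_mp (hle_meetr _ _) (hle_meetl _ _)].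
Qed.

End HeytingFacts.

(* Evaluation of formulas in an algebra of type L: [Or], [Neg] and [Imp _ Zero]
   use the operations of [B] when they exist, [Neg] being read as [_ -> 0] when
   only 0 is present; [And] and [One] get junk values, as formulas built from
   them are never [expressible] in [B]. *)
Definition bor (B : lalg) (a b : B) : B :=
  match aor B with Some g => g a b | None => a end.

Definition bneg (B : lalg) (a : B) : B :=
  match aneg B with Some n => n a
  | None => match azero B with Some z => aimp a z | None => a end end.

Fixpoint beval (B : lalg) (e : nat -> B) (phi : fm) : B :=
  match phi with
  | Var n => e n
  | And a b => beval e a
  | Or a b => bor (beval e a) (beval e b)
  | Imp a b => match b with
               | Zero => bneg (beval e a)
               | _ => aimp (beval e a) (beval e b) end
  | Neg a => bneg (beval e a)
  | Zero => match azero B with Some z => z | None => e 0 end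
  | One => e 0
  end.

Definition has_bneg (B : lalg) : bool := isSome (aneg B) || isSome (azero B).

Fixpoint expressible (B : lalg) (phi : fm) : Prop :=
  match phi with
  | Var _ => True
  | Imp a b => expressible B a /\
               match b with Zero => has_bneg B | _ => expressible B b end
  | Or a b => isSome (aor B) /\ expressible B a /\ expressible B b
  | Neg a => isSome (aneg B) /\ expressible B a
  | Zero => isSome (azero B)
  | _ => False
  end.

Section VarietyValid.
Variables (H : heyting) (S : H -> Prop) (B : lalg) (I : Type)
  (P : (I -> H) -> Prop) (f : (I -> H) -> B).
Hypothesis P_S : forall x, P x -> forall i, S (x i).
Hypothesis f_imp : forall x y, P x -> P y ->
  P (fun i => himp (x i) (y i)) /\ f (fun i => himp (x i) (y i)) = aimp (f x) (f y).
Hypothesis f_or : forall g, aor B = Some g -> forall x y, P x -> P y ->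
  P (fun i => hjoin (x i) (y i)) /\ f (fun i => hjoin (x i) (y i)) = g (f x) (f y).
Hypothesis f_neg : forall g, aneg B = Some g -> forall x, P x ->
  P (fun i => himp (x i) (hbot H)) /\ f (fun i => himp (x i) (hbot H)) = g (f x).
Hypothesis f_zero : forall d, azero B = Some d ->
  P (fun _ => hbot H) /\ f (fun _ => hbot H) = d.
Hypothesis f_surj : forall b : B, exists2 x, P x & f x = b.

Lemma hom_bneg (x : I -> H) : P x -> has_bneg B ->
  P (fun i => himp (x i) (hbot H)) /\ f (fun i => himp (x i) (hbot H)) = bneg (f x).
Proof.
move=> Px; rewrite /has_bneg /bneg; case En: (aneg B) => [g|] /=.
  by move=> _; exact: (f_neg En Px).
case Ez: (azero B) => [d|] //= _.
have [Pd <-] := f_zero Ez.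
exact: (f_imp Px Pd).
Qed.

Lemma hom_beval phi : expressible B phi -> forall x : nat -> I -> H, (forall n, P (x n)) ->
  P (fun i => heval (fun n => x n i) phi) /\
  f (fun i => heval (fun n => x n i) phi) = beval (fun n => f (x n)) phi.
Proof.
elim: phi => [n|a IHa b IHb|a IHa b IHb|a IHa b IHb|a IHa||] //= E x Px.
- case: E => hs [Ea Eb]; move: hs; rewrite /bor.
  case Eg: (aor B) => [g|] //= _.
  have [Pa <-] := IHa Ea x Px; have [Pb <-] := IHb Eb x Px.
  exact: (f_or Eg Pa Pb).
- case: E => Ea Eb; have [Pa <-] := IHa Ea x Px.
  case: b IHb Eb => [m|b1 b2|b1 b2|b1 b2|b1||] IHb Eb;
    try by have [Pb <-] := IHb Eb x Px; exact: (f_imp Pa Pb).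
  exact: hom_bneg Pa Eb.
- case: E => En Ea; have [Pa <-] := IHa Ea x Px.
  by apply: hom_bneg Pa _; rewrite /has_bneg En.
- by move: E; case Ez: (azero B) => [d|] //= _; exact: (f_zero Ez).
Qed.

Lemma variety_valid phi : expressible B phi ->
  (forall v : nat -> H, (forall n, S (v n)) -> heval v phi = htop H) ->
  forall (e : nat -> B) (b : B), beval e phi = aimp b b.
Proof.
move=> E valid e b.
have /boolp.choice [x xP] : forall n, exists x, P x /\ f x = e n.
  by move=> n; have [x ? ?] := f_surj (e n); exists x.
have Px n : P (x n) by case: (xP n).
have -> : e = (fun n => f (x n)) by apply: funext => n; case: (xP n).
have [xb Pxb <-] := f_surj b.
have [_ <-] := hom_beval E Px; have [_ <-] := (f_imp Pxb Pxb).
congr f; apply: funext => i.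
by rewrite himp_refl; apply: valid => n; exact: (P_S (Px n) i).
Qed.

End VarietyValid.

Record impl_laws (B : lalg) : Prop := ImplLaws {
  impl_K : forall a b c : B, aimp a (aimp b a) = aimp c c;
  impl_S : forall t a b c : B,
    aimp (aimp t (aimp a b)) (aimp (aimp t a) (aimp t b)) = aimp c c;
  impl_weaken_refl : forall t a c : B, aimp t (aimp a a) = aimp c c;
  impl_orl : isSome (aor B) -> forall a b c : B, aimp a (bor a b) = aimp c c;
  impl_orr : isSome (aor B) -> forall a b c : B, aimp b (bor a b) = aimp c c;
  impl_or_elim : isSome (aor B) -> forall a b d c : B,
    aimp (aimp a d) (aimp (aimp b d) (aimp (bor a b) d)) = aimp c c;
  impl_neg_elim : has_bneg B -> forall a b c : B, aimp a (aimp (bneg a) b) = aimp c c;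
  impl_neg_absorb : has_bneg B -> forall a c : B, aimp (aimp a (bneg a)) (bneg a) = aimp c c }.

Lemma variety_impl_laws (L : lang) (H : heyting) (S : H -> Prop) (B : lalg) :
  in_variety L S B -> impl_laws B.
Proof.
case=> _ [I [P [f [P_S [f_imp [_ [f_or [f_neg [f_zero [_ f_surj]]]]]]]]]].
have V := variety_valid P_S f_imp f_or f_neg f_zero f_surj.
split.
- move=> a b c; refine (V (Imp (Var 0) (Imp (Var 1) (Var 0))) _ _ (nth a [:: a; b]) c);
    [by [] | move=> v _; exact: himpK].
- move=> t a b c; refine (V (Imp (Imp (Var 0) (Imp (Var 1) (Var 2)))
      (Imp (Imp (Var 0) (Var 1)) (Imp (Var 0) (Var 2)))) _ _ (nth b [:: t; a]) c);
    [by [] | move=> v _; exact: himpS].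
- move=> t a c; refine (V (Imp (Var 0) (Imp (Var 1) (Var 1))) _ _ (nth a [:: t]) c);
    [by [] | move=> v _; exact: himp_weaken_refl].
- move=> hs a b c; refine (V (Imp (Var 0) (Or (Var 0) (Var 1))) _ _ (nth b [:: a]) c);
    [by [] | move=> v _; exact: himp_joinl].
- move=> hs a b c; refine (V (Imp (Var 1) (Or (Var 0) (Var 1))) _ _ (nth b [:: a]) c);
    [by [] | move=> v _; exact: himp_joinr].
- move=> hs a b d c; refine (V (Imp (Imp (Var 0) (Var 2)) (Imp (Imp (Var 1) (Var 2))
      (Imp (Or (Var 0) (Var 1)) (Var 2)))) _ _ (nth d [:: a; b]) c);
    [by [] | move=> v _; exact: himp_join_elim].
- move=> hs a b c; refine (V (Imp (Var 0) (Imp (Imp (Var 0) Zero) (Var 1))) _ _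
      (nth b [:: a]) c); [by [] | move=> v _; exact: himp_neg_elim].
- move=> hs a c; refine (V (Imp (Imp (Var 0) (Imp (Var 0) Zero)) (Imp (Var 0) Zero)) _ _
      (nth a [::]) c); [by [] | move=> v _; exact: himp_neg_absorb].
Qed.

Definition chain (B : lalg) (l : seq B) (b : B) : B := foldr (@aimp B) b l.

Lemma chain_rcons (B : lalg) (s : seq B) t b : chain (rcons s t) b = chain s (aimp t b).
Proof. by elim: s => [|x s IH] //=; rewrite IH. Qed.

Section Filters.
Variables (B : lalg) (laws : impl_laws B).
Implicit Types (E F G : B -> Prop) (l : seq B) (N : seq B -> Prop).

Lemma filter_one F x : impl_filter F -> x = aimp x x -> F x.
Proof. by move=> [F1 _] ->. Qed.

(* By the deduction theorem, [fgen F l] is the filter generated by [F] and [l]. *)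
Definition fgen F l : B -> Prop := fun b => F (chain l b).

Lemma fgen_cons F t l b : fgen F (t :: l) b = fgen (fgen F [:: t]) l b.
Proof. by []. Qed.

Lemma fgen1_filter F t : impl_filter F -> impl_filter (fgen F [:: t]).
Proof.
move=> hF; have [F1 Fmp] := hF; split => [a|a b ta tab]; rewrite /fgen /=.
  by apply: filter_one hF _; exact: (impl_weaken_refl laws).
apply: (Fmp _ _ ta); apply: (Fmp _ _ tab).
by apply: filter_one hF _; exact: (impl_S laws).
Qed.

Lemma fgen1_sub F t b : impl_filter F -> F b -> fgen F [:: t] b.
Proof.
move=> hF Fb; case: (hF) => _ Fmp; apply: (Fmp _ _ Fb).
by apply: filter_one hF _; exact: (impl_K laws).
Qed.

Lemma fgen1_mem F t : impl_filter F -> fgen F [:: t] t.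
Proof. by case=> F1 _; apply: F1. Qed.

Lemma fgen_filter F l : impl_filter F -> impl_filter (fgen F l).
Proof. by elim: l F => [|t l IH] F hF //; exact: (IH _ (fgen1_filter t hF)). Qed.

Lemma fgen_sub F l b : impl_filter F -> F b -> fgen F l b.
Proof.
elim: l F => [|t l IH] F hF Fb //; rewrite fgen_cons.
by apply: IH; [apply: fgen1_filter | apply: fgen1_sub].
Qed.

Lemma fgen_mem F l t : impl_filter F -> In t l -> fgen F l t.
Proof.
elim: l F => [|s l IH] F hF //= [<-|tl]; rewrite fgen_cons.
  by apply: fgen_sub; [apply: fgen1_filter | apply: fgen1_mem].
by apply: IH => //; apply: fgen1_filter.
Qed.

Lemma fgen_mp F l b : impl_filter F -> (forall t, In t l -> F t) -> fgen F l b -> F b.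
Proof.
elim: l F => [|t l IH] F hF lF //; rewrite fgen_cons => lb.
have tb : fgen F [:: t] b.
  apply: IH (fgen1_filter t hF) _ lb => s sl.
  by apply: fgen1_sub => //; apply: lF; right.
by case: hF => _ Fmp; apply: Fmp tb; apply: lF; left.
Qed.

Lemma fgen_imp F l t c : impl_filter F -> In t l -> F (aimp t c) -> fgen F l c.
Proof.
move=> hF tl Ftc; have [_ mp] := fgen_filter l hF.
exact: (mp t c (fgen_mem hF tl) (fgen_sub l hF Ftc)).
Qed.

Lemma filter_bneg_all F a : impl_filter F -> has_bneg B -> F a -> F (bneg a) ->
  forall b, F b.
Proof.
move=> hF hs Fa Fna b; have [_ Fmp] := hF.
apply: (Fmp _ _ Fna); apply: (Fmp _ _ Fa).
by apply: filter_one hF _; exact: (impl_neg_elim laws).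
Qed.

Definition avoids (N : seq B -> Prop) F := forall n, N n -> ~ (forall t, In t n -> F t).

Definition avoiding_ext E N F := [/\ impl_filter F, (forall b, E b -> F b) & avoids N F].

Lemma avoiding_ext_chain_ub E N (A : {F | avoiding_ext E N F} -> Prop) :
  impl_filter E -> avoids N E ->
  (forall s t, A s -> A t ->
     (forall x, sval s x -> sval t x) \/ (forall x, sval t x -> sval s x)) ->
  avoiding_ext E N (fun x => E x \/ exists2 s, A s & sval s x).
Proof.
move=> hE EN Atot; set U := fun x => _.
have fin n : (forall t, In t n -> U t) ->
    (forall t, In t n -> E t) \/ exists2 s, A s & forall t, In t n -> sval s t.
  elim: n => [|a n IH] nU; first by left.
  have sE (s : {F | avoiding_ext E N F}) x : E x -> sval s x.
    by case: (proj2_sig s) => _ + _; apply.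
  have [nE|[s As ns]] := IH (fun t tn => nU t (or_intror tn));
    case: (nU a (or_introl erefl)) => [Ea|[s' As' s'a]].
  - by left => t [<-|/nE].
  - by right; exists s' => // t [<-|/nE /sE].
  - by right; exists s => // t [<-|/ns] //; apply: sE.
  - case: (Atot s s' As As') => ss'; right.
    + by exists s' => // t [<-|/ns /ss'].
    + by exists s => // t [<-|/ns]; [apply: ss'|].
split; last first.
- move=> n Nn /fin [nE|[s As ns]]; first exact: EN Nn nE.
  by case: (proj2_sig s) => _ _ sN; exact: sN n Nn ns.
- by move=> b Eb; left.
split=> [a|a b Ua Uab]; first by left; case: hE.
have [|nE|[s As ns]] := fin [:: a; aimp a b]; first by move=> t [<-|[<-|[]]].
- by left; case: hE => _; apply; apply: nE; [left | right; left].
- right; exists s => //; case: (proj2_sig s) => [[_ smp] _ _].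
  by apply: smp; apply: ns; [left | right; left].
Qed.

Definition directed N := forall n1 n2, N n1 -> N n2 -> exists2 n, N n &
  forall F, impl_filter F ->
    (forall t, In t n1 -> F t) \/ (forall t, In t n2 -> F t) -> forall t, In t n -> F t.

Lemma maximal_avoiding_ext_meet_irr E N M :
  (exists n, N n) -> directed N -> avoiding_ext E N M ->
  (forall F, avoiding_ext E N F -> (forall x, M x -> F x) -> forall x, F x -> M x) ->
  meet_irr_filter M.
Proof.
move=> [n0 Nn0] Ndir [hM EsubM NM] Mmax; split => //.
  apply: contrapT => Mall; apply: (NM n0 Nn0) => x _.
  by apply: contrapT => Mx; apply: Mall; exists x.
move=> G1 G2 hG1 hG2 M12.
have grow G : impl_filter G -> (forall x, M x -> G x) ->
    (forall x, G x <-> M x) \/ exists2 n, N n & forall t, In t n -> G t.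
  move=> hG MG; have [|GN] := EM (exists2 n, N n & forall t, In t n -> G t).
    by right.
  have GN' : avoids N G by move=> n Nn nG; apply: GN; exists n.
  have GM := Mmax G (And3 hG (fun b Eb => MG b (EsubM b Eb)) GN') MG.
  by left => x; split; [apply: GM | apply: MG].
have [|G1M|[n1 Nn1 n1G1]] := grow G1 hG1; [by move=> x /M12 [] | by left |].
have [|G2M|[n2 Nn2 n2G2]] := grow G2 hG2; [by move=> x /M12 [] | by right |].
have [n Nn nG] := Ndir _ _ Nn1 Nn2.
by exfalso; apply: (NM n Nn) => x xn; apply/M12; split; apply: nG xn => //; [left|right].
Qed.

Lemma filter_zorn E N : impl_filter E -> avoids N E -> (exists n, N n) -> directed N ->
  exists M, [/\ meet_irr_filter M, (forall b, E b -> M b) & avoids N M].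
Proof.
move=> hE EN Nne Ndir.
pose R (s t : {F | avoiding_ext E N F}) := `[< forall x, sval s x -> sval t x >].
have [| | |M Mmax] := @classical_sets.ZL_preorder _ (exist _ E (And3 hE (fun b Eb => Eb) EN)) R.
- by move=> s; apply/asboolP.
- by move=> r s t /asboolP rs /asboolP st; apply/asboolP => x /rs /st.
- move=> A Atot.
  have Atot' s t : A s -> A t ->
      (forall x, sval s x -> sval t x) \/ (forall x, sval t x -> sval s x).
    by move=> As At; case: (Atot s t As At) => /asboolP; [left | right].
  exists (exist _ _ (avoiding_ext_chain_ub hE EN Atot')) => s As.
  by apply/asboolP => x sx; right; exists s.
- exists (sval M); case: (proj2_sig M) => hM EsubM NM; split => //.
  apply: maximal_avoiding_ext_meet_irr Nne Ndir (proj2_sig M) _ => F gF MF.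
  by have /asboolP := Mmax (exist _ F gF) (asboolT MF).
Qed.

Lemma prime_separation F c : impl_filter F -> ~ F c ->
  exists M, [/\ meet_irr_filter M, (forall b, F b -> M b) & ~ M c].
Proof.
move=> hF Fc.
have [|||M [hM FM cM]] := @filter_zorn F (fun n => n = [:: c]) hF.
- by move=> n -> nF; apply: Fc; apply: nF; left.
- by exists [:: c].
- by move=> n1 n2 -> ->; exists [:: c] => // G _ [] cG.
- by exists M; split => // Mc; apply: (cM _ erefl) => t [<-|[]].
Qed.

Section MeetIrreducible.
Variables (P : B -> Prop) (hP : meet_irr_filter P).

Lemma meet_irr_filterW : impl_filter P. Proof. by case: hP. Qed.

Lemma meet_irr_proper : exists b, ~ P b. Proof. by case: hP. Qed.

Lemma meet_irr_pair a b : ~ P a -> ~ P b ->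
  exists c, [/\ ~ P c, P (aimp a c) & P (aimp b c)].
Proof.
move=> Pa Pb; apply: contrapT => nc.
case: hP => hF _ irr.
have [x|/(_ a) [/(_ (fgen1_mem a hF))]|/(_ b) [/(_ (fgen1_mem b hF))]] // :=
  irr _ _ (fgen1_filter a hF) (fgen1_filter b hF).
split=> [Px|[ax bx]]; first by split; apply: fgen1_sub.
by apply: contrapT => Px; apply: nc; exists x.
Qed.

Lemma meet_irr_common_bound (ts : seq B) : (forall t, In t ts -> ~ P t) ->
  exists c, ~ P c /\ forall t, In t ts -> P (aimp t c).
Proof.
elim: ts => [|t ts IH] tsP; first by have [b Pb] := meet_irr_proper; exists b.
have [c' [Pc' tsc']] := IH (fun s sts => tsP s (or_intror sts)).
have [c [Pc tc c'c]] := meet_irr_pair (tsP t (or_introl erefl)) Pc'.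
exists c; split => // s [<-|sts] //.
have [_ smp] := fgen1_filter s meet_irr_filterW.
by apply: (smp c' _ (tsc' s sts)); apply: fgen1_sub meet_irr_filterW c'c.
Qed.

Lemma meet_irr_prime a b : isSome (aor B) -> P (bor a b) -> P a \/ P b.
Proof.
move=> hs Pab; apply: contrapT => /not_orP [Pa Pb].
have [c [Pc ac bc]] := meet_irr_pair Pa Pb.
apply: Pc; have [_ Pmp] := meet_irr_filterW.
apply: (Pmp _ _ Pab); apply: (Pmp _ _ bc); apply: (Pmp _ _ ac).
by apply: filter_one meet_irr_filterW _; exact: (impl_or_elim laws).
Qed.

Lemma meet_irr_avoid_meet (Gs : seq (B -> Prop)) :
  (forall G, In G Gs -> impl_filter G) ->
  (forall G, In G Gs -> exists a, G a /\ ~ P a) ->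
  exists d, (forall G, In G Gs -> G d) /\ ~ P d.
Proof.
elim: Gs => [|G Gs IH] Gsf GsP; first by have [b Pb] := meet_irr_proper; exists b.
have [d' [Gsd' Pd']] := IH (fun G' h => Gsf G' (or_intror h)) (fun G' h => GsP G' (or_intror h)).
have [a [Ga Pa]] := GsP G (or_introl erefl).
have [c [Pc ac d'c]] := meet_irr_pair Pa Pd'.
pose l := [:: aimp a c; aimp d' c].
have lG G' x : impl_filter G' -> In (aimp x c) l -> G' x -> G' (chain l c).
  move=> hG' xcl G'x; have [_ mp] := fgen_filter l hG'.
  exact: (mp x _ (fgen_sub _ hG' G'x) (fgen_mem hG' xcl)).
exists (chain l c); split.
  move=> G' [<-|G'Gs]; first by apply: lG Ga; [apply: Gsf; left | left].
  by apply: lG (Gsd' _ G'Gs); [apply: Gsf; right | right; left].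
by move/(fgen_mp meet_irr_filterW) => lP; apply: Pc; apply: lP => t [<-|[<-|[]]].
Qed.

End MeetIrreducible.
End Filters.

Lemma In_cat (T : Type) (x : T) (s1 s2 : seq T) : In x (s1 ++ s2) <-> In x s1 \/ In x s2.
Proof. by elim: s1 => [|y s1 IH] /=; [split; [right | case] | rewrite IH; tauto]. Qed.

Lemma In_map (T U : Type) (f : T -> U) (y : U) (s : seq T) :
  In y (map f s) <-> exists x, In x s /\ y = f x.
Proof.
elim: s => [|x s IH] /=; first by split => // [[x []]].
rewrite IH; split.
- by case=> [<-|[z [zs ->]]]; [exists x; split; [left|] | exists z; split; [right|]].
- by case=> z [[<-|zs] ->]; [left | right; exists z].
Qed.

Lemma In_allpairs (S T U : Type) (g : S -> T -> U) (s : seq S) (t : seq T) z :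
  In z [seq g x y | x <- s, y <- t] <-> exists x y, [/\ In x s, In y t & z = g x y].
Proof.
elim: s => [|x s IH] /=; first by split => // [[x [y []]]].
rewrite In_cat In_map IH; split.
- case=> [[y [yt ->]]|[x' [y [x's yt ->]]]]; first by exists x, y; split; [left|..].
  by exists x', y; split; [right|..].
- by case=> x' [y [[<-|x's] yt ->]]; [left; exists y | right; exists x', y].
Qed.

Lemma all_In (T : Type) (p : T -> bool) (s : seq T) x : all p s -> In x s -> p x.
Proof. by elim: s => [|y s IH] //= /andP [py ps] [<-|/IH]; last apply. Qed.

Fixpoint negchain (B : lalg) (b0 : B) (s : seq B) : B :=
  match s with
  | [::] => bneg (aimp b0 b0)
  | [:: t] => bneg t
  | t :: s' => aimp t (negchain b0 s')
  end.

Lemma negchain_rcons (B : lalg) (b0 : B) s t : negchain b0 (rcons s t) = chain s (bneg t).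
Proof. by elim: s => [|x s IH] //=; rewrite -IH; case: s {IH}. Qed.

(* [trl l b0 phi] is built from [phi] as [trk k phi] is, with the list [l m]
   in place of the copies of the variable [m], and [b0] in place of the
   variable x_0^1 used by the translations of [Zero] and [One]. *)
Fixpoint trl (B : lalg) (l : nat -> seq B) (b0 : B) (phi : fm) : seq B :=
  match phi with
  | Var m => l m
  | And a b => trl l b0 a ++ trl l b0 b
  | Or a b => [seq bor x y | x <- trl l b0 a, y <- trl l b0 b]
  | Imp a b => [seq chain (trl l b0 a) c | c <- trl l b0 b]
  | Neg a => [:: negchain b0 (trl l b0 a)]
  | Zero => [:: b0; bneg b0]
  | One => [:: aimp b0 b0]
  end.

Definition cval (B : lalg) (l : nat -> seq B) : nat -> filt_star B -> Prop :=
  fun m P => forall t, In t (l m) -> sval P t.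

Section Points.
Variables (B : lalg) (laws : impl_laws B).
Local Notation X := (filt_star B).
Local Notation le := (@filt_le B).

Lemma point_filter (P : X) : impl_filter (sval P).
Proof. by case: P => F []. Qed.

Lemma point_proper (P : X) : exists b, ~ sval P b.
Proof. by case: P => F []. Qed.

Lemma point_bneg (P : X) a : has_bneg B -> sval P a -> sval P (bneg a) -> False.
Proof.
move=> hs Pa Pna; have [b Pb] := point_proper P; apply: Pb.
exact: (filter_bneg_all laws (point_filter P) hs Pa Pna b).
Qed.

Lemma point_chain_sep (P : X) s c : ~ sval P (chain s c) ->
  exists Q : X, [/\ le P Q, (forall t, In t s -> sval Q t) & ~ sval Q c].
Proof.
move=> Pc; have [M [hM PM Mc]] := prime_separation (fgen_filter laws s (point_filter P)) Pc.
exists (exist _ M hM); split => // [x Px|t ts]; apply: PM.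
  exact: (fgen_sub laws s (point_filter P) Px).
exact: (fgen_mem laws (point_filter P) ts).
Qed.

Lemma point_chain_mp (P Q : X) s c : le P Q -> sval P (chain s c) ->
  (forall t, In t s -> sval Q t) -> sval Q c.
Proof. by move=> PQ Pc sQ; apply: (fgen_mp laws (point_filter Q) sQ); apply: PQ. Qed.

Lemma point_or_iff (P : X) s1 s2 : isSome (aor B) ->
  (forall t, In t s1 -> sval P t) \/ (forall t, In t s2 -> sval P t) <->
  forall t, In t [seq bor x y | x <- s1, y <- s2] -> sval P t.
Proof.
move=> hs; have [_ Pmp] := point_filter P; split.
  move=> Ps t /In_allpairs [x [y [xs1 ys2 ->]]].
  case: Ps => [/(_ x xs1)|/(_ y ys2)] Pxy; apply: (Pmp _ _ Pxy).
    by apply: filter_one (point_filter P) _; exact: (impl_orl laws).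
  by apply: filter_one (point_filter P) _; exact: (impl_orr laws).
move=> Pall; apply: contrapT => /not_orP [/existsNP [x /not_implyP [xs1 Px]]
                                          /existsNP [y /not_implyP [ys2 Py]]].
have /Pall : In (bor x y) [seq bor x y | x <- s1, y <- s2].
  by apply/In_allpairs; exists x, y.
by case/(meet_irr_prime laws (proj2_sig P) hs).
Qed.

Lemma point_imp_iff (P : X) s1 s2 :
  (forall Q : X, le P Q -> (forall t, In t s1 -> sval Q t) -> forall t, In t s2 -> sval Q t) <->
  forall t, In t [seq chain s1 c | c <- s2] -> sval P t.
Proof.
split=> [Pimp t /In_map [c [cs2 ->]]|Ps Q PQ s1Q c cs2].
  apply: contrapT => /point_chain_sep [Q [PQ s1Q Qc]].
  exact: Qc (Pimp Q PQ s1Q c cs2).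
by apply: point_chain_mp PQ _ s1Q; apply: Ps; apply/In_map; exists c.
Qed.

Lemma point_neg_iff (P : X) b0 s : has_bneg B ->
  (forall Q : X, le P Q -> ~ forall t, In t s -> sval Q t) <-> sval P (negchain b0 s).
Proof.
move=> hs; case/lastP: s => [|s t].
  split=> [/(_ P (fun _ => id)) PQ|Pn1 Q PQ _]; first by exfalso; apply: PQ.
  by apply: point_bneg hs (_ : sval Q (aimp b0 b0)) (PQ _ Pn1); case: (point_filter Q).
have F := point_filter P; rewrite negchain_rcons; split => [PQ|Pst Q PQ sQ].
  apply: contrapT => Pst.
  have nP : ~ fgen (sval P) (rcons s t) (bneg t).
    rewrite /fgen chain_rcons => Pst'; apply: Pst.
    have [_ mp] := fgen_filter laws s F; apply: (mp _ _ Pst').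
    by apply: filter_one (fgen_filter laws s F) _; exact: (impl_neg_absorb laws).
  have [M [hM PM Mt]] := prime_separation (fgen_filter laws (rcons s t) F) nP.
  apply: (PQ (exist _ M hM)) => [x Px|x xst]; apply: PM.
    exact: (fgen_sub laws _ F Px).
  exact: (fgen_mem laws F xst).
have tQ : sval Q t by apply: sQ; rewrite -cats1; apply/In_cat; right; left.
apply: (point_bneg hs tQ); apply: point_chain_mp PQ Pst _ => x xs.
by apply: sQ; rewrite -cats1; apply/In_cat; left.
Qed.

Lemma upeval_cval L l b0 phi : has_sig L B -> in_lang L phi -> forall P : X,
  upeval le (cval l) phi P <-> forall t, In t (trl l b0 phi) -> sval P t.
Proof.
case=> _ sO sN sZ _.
elim: phi => [m|a IHa b IHb|a IHa b IHb|a IHa b IHb|a IHa||] //= Lphi P.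
- case/andP: Lphi => /andP [_ La] Lb; rewrite IHa // IHb //; split.
    by case=> Pa Pb t /In_cat [/Pa|/Pb].
  by move=> Pab; split => t ts; apply: Pab; apply/In_cat; [left|right].
- case/andP: Lphi => /andP [hs La] Lb; rewrite -sO in hs.
  by rewrite IHa // IHb //; apply: point_or_iff.
- case/andP: Lphi => La Lb; rewrite -point_imp_iff.
  by split=> PQ Q PQ' /(IHa La) /(PQ Q PQ') /(IHb Lb).
- case/andP: Lphi => hn La; rewrite -sN in hn.
  have hs : has_bneg B by rewrite /has_bneg hn.
  have -> : (forall t, In t [:: negchain b0 (trl l b0 a)] -> sval P t) <->
            sval P (negchain b0 (trl l b0 a)).
    by split=> [/(_ _ (or_introl erefl))|Pn t [<-|[]]].
  rewrite -(point_neg_iff P b0 _ hs).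
  by split=> Pn Q PQ /(IHa La); apply: Pn.
- rewrite -sZ in Lphi; have hs : has_bneg B by rewrite /has_bneg Lphi orbT.
  split=> // P0; apply: (point_bneg hs (P0 b0 (or_introl erefl))).
  by apply: P0; right; left.
- by split=> // _ t [<-|[]]; case: (point_filter P).
Qed.

End Points.

Lemma map_In_ext (T U : Type) (f g : T -> U) (s : seq T) :
  (forall x, In x s -> f x = g x) -> map f s = map g s.
Proof.
elim: s => [|x s IH] fg //=; rewrite fg; last by left.
by rewrite IH // => y ys; apply: fg; right.
Qed.

Lemma trk_neq_nil k phi : 0 < k -> trk k phi <> [::].
Proof.
move=> k_gt0; elim: phi => [m|a IHa b IHb|a IHa b IHb|a IHa b IHb|a IHa||] //=.
- by case: k k_gt0.
- by case: (trk k a) IHa.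
- by case: (trk k a) IHa => // x s _; case: (trk k b) IHb.
- by case: (trk k b) IHb.
Qed.

Lemma trk_neq_Zero k phi psi : 0 < k -> In psi (trk k phi) -> psi <> Zero.
Proof.
move=> k_gt0; elim: phi psi => [m|a IHa b IHb|a IHa b IHb|a IHa b IHb|a IHa||] /= psi.
- by move/In_map => [j [_ ->]].
- by case/In_cat; [apply: IHa | apply: IHb].
- by move/In_allpairs => [x [y [_ _ ->]]].
- by move/In_map => [c [_ ->]]; case: (trk k a) (@trk_neq_nil k a k_gt0).
- by case=> [<-|[]]; case: (trk k a) (@trk_neq_nil k a k_gt0).
- by case=> [<-|[<-|[]]].
- by case=> [<-|[]].
Qed.

Section TranslationEval.
Variable B : lalg.

Lemma beval_foldr_Imp (e : nat -> B) chi l : chi <> Zero ->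
  beval e (foldr Imp chi l) = chain (map (beval e) l) (beval e chi).
Proof.
move=> chi_nz; elim: l => [|x l IH] //=.
by rewrite -IH; case: l {IH} => [|y l] //=; case: chi chi_nz.
Qed.

Lemma beval_foldr_Imp_Zero (e : nat -> B) b0 l : l <> [::] ->
  beval e (foldr Imp Zero l) = negchain b0 (map (beval e) l).
Proof.
elim: l => [|x l IH] // _; case: l IH => [|y l] IH //=.
by congr (aimp _ _); exact: IH.
Qed.

Lemma beval_trk k (e : nat -> B) phi : 0 < k ->
  map (beval e) (trk k phi) =
  trl (fun m => [seq e (copy m j) | j <- iota 1 k]) (e (copy 0 1)) phi.
Proof.
move=> k_gt0; elim: phi => [m|a IHa b IHb|a IHa b IHb|a IHa b IHb|a IHa||] //=.
- by rewrite -map_comp.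
- by rewrite map_cat IHa IHb.
- by rewrite map_allpairs -IHa -IHb allpairs_mapl allpairs_mapr.
- rewrite -IHa -IHb -!map_comp; apply: map_In_ext => chi chi_trk /=.
  exact: beval_foldr_Imp (trk_neq_Zero k_gt0 chi_trk).
- by rewrite -IHa (beval_foldr_Imp_Zero _ (e (copy 0 1)) (@trk_neq_nil k a k_gt0)).
Qed.

Lemma beval_A_form (Q : quasi) k (e : nat -> B) :
  beval e (A_form Q k) =
  chain [seq chain (map (beval e) (trk k phi)) (e 0) | phi <- q_phis Q] (e 0).
Proof.
rewrite /A_form beval_foldr_Imp // -map_comp; congr chain.
by apply: map_In_ext => phi _ /=; exact: beval_foldr_Imp.
Qed.

Lemma expressible_Imp x y : y <> Zero ->
  expressible B (Imp x y) <-> expressible B x /\ expressible B y.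
Proof. by case: y. Qed.

Lemma expressible_foldr_Imp chi l : chi <> Zero -> expressible B chi ->
  (forall x, In x l -> expressible B x) -> expressible B (foldr Imp chi l).
Proof.
move=> chi_nz Echi; elim: l => [|x l IH] // El.
apply/expressible_Imp; first by case: l {IH El}.
by split; [apply: El; left | apply: IH => y yl; apply: El; right].
Qed.

Lemma expressible_foldr_Imp_Zero l : isSome (aneg B) -> l <> [::] ->
  (forall x, In x l -> expressible B x) -> expressible B (foldr Imp Zero l).
Proof.
move=> hn; elim: l => [|x [|y l] IH] //= _ El.
  by split; [apply: El; left | rewrite /has_bneg hn].
by split; [apply: El; left | apply: IH => // z zl; apply: El; right].
Qed.

Lemma expressible_trk L k phi psi : has_sig L B -> in_lang L phi -> 0 < k ->
  In psi (trk k phi) -> expressible B psi.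
Proof.
case=> _ sO sN sZ _ Lphi k_gt0.
elim: phi Lphi psi => [m|a IHa b IHb|a IHa b IHb|a IHa b IHb|a IHa||] /= Lphi psi.
- by move/In_map => [j [_ ->]].
- by case/andP: Lphi => /andP [_ La] Lb /In_cat [/IHa|/IHb]; apply.
- case/andP: Lphi => /andP [ho La] Lb; rewrite -sO in ho.
  by move/In_allpairs => [x [y [xa yb ->]]] /=; split => //; split; [exact: IHa | exact: IHb].
- case/andP: Lphi => La Lb /In_map [c [cb ->]].
  apply: (expressible_foldr_Imp (trk_neq_Zero k_gt0 cb)); [exact: IHb | exact: IHa].
- case/andP: Lphi => hn La [<-|[]]; rewrite -sN in hn.
  by apply: expressible_foldr_Imp_Zero => //; [exact: trk_neq_nil | exact: IHa].
- by rewrite -sZ in Lphi; case=> [<-|[<-|[]]] //=; rewrite /has_bneg Lphi orbT.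
- by case=> [<-|[]].
Qed.

Lemma expressible_A_form L (Q : quasi) k : has_sig L B -> all (in_lang L) (q_phis Q) ->
  0 < k -> expressible B (A_form Q k).
Proof.
move=> sig QL k_gt0; apply: expressible_foldr_Imp => // x /In_map [phi [Qphi ->]].
apply: expressible_foldr_Imp => // psi; apply: (expressible_trk sig _ k_gt0).
exact: all_In QL Qphi.
Qed.

End TranslationEval.

Section UpsetSemantics.
Variables (X : Type) (le : X -> X -> Prop).
Local Notation ue := (upeval le).
Implicit Types v : nat -> X -> Prop.

Definition subval v1 v2 := forall m x, v1 m x -> v2 m x.

Lemma upeval_mono phi :
  (positive phi -> forall v1 v2, subval v1 v2 -> forall x, ue v1 phi x -> ue v2 phi x) /\
  (negative phi -> forall v1 v2, subval v1 v2 -> forall x, ue v2 phi x -> ue v1 phi x).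
Proof.
elim: phi => [m|a [IHa1 IHa2] b [IHb1 IHb2]|a [IHa1 IHa2] b [IHb1 IHb2]
             |a [IHa1 IHa2] b [IHb1 IHb2]|a [IHa1 IHa2]||] /=; split => //.
- by move=> _ v1 v2 v12 x; apply: v12.
- by move=> /andP [pa pb] v1 v2 v12 x [ha hb]; split; [apply: IHa1 ha | apply: IHb1 hb].
- by move=> /andP [na nb] v1 v2 v12 x [ha hb]; split; [apply: IHa2 ha | apply: IHb2 hb].
- by move=> /andP [pa pb] v1 v2 v12 x [ha|hb]; [left; apply: IHa1 ha | right; apply: IHb1 hb].
- by move=> /andP [na nb] v1 v2 v12 x [ha|hb]; [left; apply: IHa2 ha | right; apply: IHb2 hb].
- move=> /andP [na pb] v1 v2 v12 x hx y xy ha; apply: (IHb1 pb _ _ v12).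
  by apply: hx xy _; apply: IHa2 na _ _ v12 _ ha.
- move=> /andP [pa nb] v1 v2 v12 x hx y xy ha; apply: (IHb2 nb _ _ v12).
  by apply: hx xy _; apply: IHa1 pa _ _ v12 _ ha.
- by move=> na v1 v2 v12 x hx y xy ha; apply: (hx y xy); apply: IHa2 na _ _ v12 _ ha.
- by move=> pa v1 v2 v12 x hx y xy ha; apply: (hx y xy); apply: IHa1 pa _ _ v12 _ ha.
Qed.

Lemma upeval_pos phi v1 v2 : positive phi -> subval v1 v2 ->
  forall x, ue v1 phi x -> ue v2 phi x.
Proof. by move=> pphi; apply: (proj1 (upeval_mono phi)). Qed.

Lemma upeval_neg phi v1 v2 : negative phi -> subval v1 v2 ->
  forall x, ue v2 phi x -> ue v1 phi x.
Proof. by move=> nphi; apply: (proj2 (upeval_mono phi)). Qed.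

Lemma upeval_agree phi v1 v2 : (forall m, occurs m phi -> forall x, v1 m x <-> v2 m x) ->
  forall x, ue v1 phi x <-> ue v2 phi x.
Proof.
elim: phi => [m|a IHa b IHb|a IHa b IHb|a IHa b IHb|a IHa||] //= v12 x.
- by apply: v12; rewrite eqxx.
- by rewrite IHa ?IHb // => m hm; apply: v12; rewrite hm ?orbT.
- by rewrite IHa ?IHb // => m hm; apply: v12; rewrite hm ?orbT.
- have ha := IHa (fun m hm => v12 m (introT orP (or_introl hm))).
  have hb := IHb (fun m hm => v12 m (introT orP (or_intror hm))).
  by split=> hx y xy; [rewrite -ha -hb | rewrite ha hb]; apply: hx.
- by have ha := IHa v12; split=> hx y xy; [rewrite -ha | rewrite ha]; apply: hx.
Qed.

Lemma ante_min_support a v x : sahl_ante a -> ue v a x ->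
  exists R : seq nat, (forall m, In m R -> v m x) /\
    forall v', subval v' v -> (forall m, In m R -> v' m x) -> ue v' a x.
Proof.
elim: a v x => [m|a IHa b IHb|a IHa b IHb|a IHa b IHb|a IHa||] v x /orP [na|Sa] ha;
  try by exists [::]; split => // v' v'v _; apply: upeval_neg na v'v _ ha.
- by exists [:: m]; split=> [m' [<-|[]] //|v' _]; apply; left.
- case/andP: Sa ha => Sa Sb [ha hb].
  have [R1 [R1v R1a]] := IHa v x Sa ha; have [R2 [R2v R2b]] := IHb v x Sb hb.
  exists (R1 ++ R2); split=> [m /In_cat [/R1v|/R2v] //|v' v'v R].
  by split; [apply: R1a | apply: R2b] => // m mR; apply: R; apply/In_cat; [left|right].
- case/andP: Sa ha => Sa Sb [ha|hb].
    by have [R [Rv Ra]] := IHa v x Sa ha; exists R; split=> // v' v'v R'; left; apply: Ra.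
  by have [R [Rv Rb]] := IHb v x Sb hb; exists R; split=> // v' v'v R'; right; apply: Rb.
Qed.

Lemma imp_min_support phi v x : sahl_imp phi -> ~ ue v phi x ->
  exists R : seq (nat * X), (forall p, In p R -> v p.1 p.2) /\
    forall v', subval v' v -> (forall p, In p R -> v' p.1 p.2) -> ~ ue v' phi x.
Proof.
case/orP=> [pphi nphi|]; first by exists [::]; split=> // v' v'v _ /(upeval_pos pphi v'v).
case: phi => [m|a b|a b|a b /andP [Sa pb]|a Sa||] //= /existsNP [y /not_implyP [xy]].
- move=> /not_implyP [ha hb]; have [R [Rv Ra]] := ante_min_support Sa ha.
  exists [seq (m, y) | m <- R]; split=> [p /In_map [m [mR ->]]|v' v'v R' hx]; first exact: Rv.
  apply: hb; apply: (upeval_pos pb v'v); apply: hx xy _; apply: Ra => // m mR.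
  by apply: (R' (m, y)); apply/In_map; exists m.
- move=> /contrapT ha; have [R [Rv Ra]] := ante_min_support Sa ha.
  exists [seq (m, y) | m <- R]; split=> [p /In_map [m [mR ->]]|v' v'v R' hx]; first exact: Rv.
  apply: (hx y xy); apply: Ra => // m mR.
  by apply: (R' (m, y)); apply/In_map; exists m.
Qed.

Lemma body_min_support phi v x : sahl_body phi -> ~ ue v phi x ->
  exists R : seq (nat * X), (forall p, In p R -> v p.1 p.2) /\
    forall v', subval v' v -> (forall p, In p R -> v' p.1 p.2) -> ~ ue v' phi x.
Proof.
elim: phi v x => [m|a IHa b IHb|a IHa b IHb|a IHa b IHb|a IHa||] v x /orP [Iphi|Sphi];
  try exact: imp_min_support Iphi; rewrite /= in Sphi |- *; try by [].
- case/andP: Sphi => Sa Sb /not_andP [na|nb].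
    by have [R [Rv Ra]] := IHa v x Sa na; exists R; split=> // v' v'v R' [/(Ra v' v'v R')].
  by have [R [Rv Rb]] := IHb v x Sb nb; exists R; split=> // v' v'v R' [_ /(Rb v' v'v R')].
- case/andP: Sphi => Sa Sb /not_orP [na nb].
  have [R1 [R1v R1a]] := IHa v x Sa na; have [R2 [R2v R2b]] := IHb v x Sb nb.
  exists (R1 ++ R2); split=> [p /In_cat [/R1v|/R2v] //|v' v'v R [ha|hb]].
    by apply: (R1a v' v'v _ ha) => p pR; apply: R; apply/In_cat; left.
  by apply: (R2b v' v'v _ hb) => p pR; apply: R; apply/In_cat; right.
Qed.

Lemma bodies_min_support v x ps :
  (forall phi, In phi ps -> sahl_body phi) -> (forall phi, In phi ps -> ~ ue v phi x) ->
  exists R : seq (nat * X), (forall p, In p R -> v p.1 p.2) /\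
    forall v', subval v' v -> (forall p, In p R -> v' p.1 p.2) ->
    forall phi, In phi ps -> ~ ue v' phi x.
Proof.
elim: ps => [|p ps IH] Sps nps; first by exists [::].
have [R1 [R1v R1p]] := body_min_support (Sps p (or_introl erefl)) (nps p (or_introl erefl)).
have [R2 [R2v R2ps]] :=
  IH (fun q qps => Sps q (or_intror qps)) (fun q qps => nps q (or_intror qps)).
exists (R1 ++ R2); split=> [q /In_cat [/R1v|/R2v] //|v' v'v R phi [<-|phips]].
  by apply: R1p => // q qR; apply: R; apply/In_cat; left.
by apply: R2ps => // q qR; apply: R; apply/In_cat; right.
Qed.

End UpsetSemantics.

Section Esakia.
Variables (L : lang) (B : lalg) (laws : impl_laws B) (sig : has_sig L B).
Variables (D : nat -> B -> Prop) (b0 : B).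
Local Notation X := (filt_star B).
Local Notation le := (@filt_le B).
Local Notation ue := (upeval le).
Implicit Types l : nat -> seq B.

(* Finite sublists [l] of [D] give the approximations [cval l] of [dval]. *)
Definition dval : nat -> X -> Prop := fun m P => forall d, D m d -> sval P d.

Definition lsubD l := forall m t, In t (l m) -> D m t.

Definition lsub l1 l2 := forall m t, In t (l1 m) -> In t (l2 m).

Definition lcat l1 l2 : nat -> seq B := fun m => l1 m ++ l2 m.

Definition lnil : nat -> seq B := fun _ => [::].

Lemma lsubD_cat l1 l2 : lsubD l1 -> lsubD l2 -> lsubD (lcat l1 l2).
Proof. by move=> D1 D2 m t /In_cat [/D1|/D2]. Qed.

Lemma lsub_catl l1 l2 : lsub l1 (lcat l1 l2).
Proof. by move=> m t t1; apply/In_cat; left. Qed.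

Lemma lsub_catr l1 l2 : lsub l2 (lcat l1 l2).
Proof. by move=> m t t2; apply/In_cat; right. Qed.

Lemma lsub_trans l1 l2 l3 : lsub l1 l2 -> lsub l2 l3 -> lsub l1 l3.
Proof. by move=> l12 l23 m t /l12 /l23. Qed.

Lemma cval_anti l1 l2 : lsub l1 l2 -> subval (cval l2) (cval l1).
Proof. by move=> l12 m P l2P t /l12 /l2P. Qed.

Lemma dval_cval l : lsubD l -> subval dval (cval l).
Proof. by move=> lD m P DP t /lD /DP. Qed.

Lemma upeval_pos_lsub a l1 l2 P : positive a -> lsub l1 l2 ->
  ue (cval l2) a P -> ue (cval l1) a P.
Proof. by move=> pa l12; apply: upeval_pos pa (cval_anti l12) P. Qed.

Lemma upeval_neg_lsub a l1 l2 P : negative a -> lsub l1 l2 ->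
  ue (cval l1) a P -> ue (cval l2) a P.
Proof. by move=> na l12; apply: upeval_neg na (cval_anti l12) P. Qed.

Definition esakia_pos phi :=
  forall P : X, ~ ue dval phi P -> exists l, lsubD l /\ ~ ue (cval l) phi P.

Definition esakia_neg phi :=
  forall P : X, ue dval phi P -> exists l, lsubD l /\ ue (cval l) phi P.

Section Approximants.
Variables (a : fm) (La : in_lang L a) (pa : positive a) (G : X).

(* The filter generated by [G] and the elements making [a] true under some
   finite approximation of [D]. *)
Definition approx_filter : B -> Prop :=
  fun x => exists l, lsubD l /\ sval G (chain (trl l b0 a) x).

Lemma approx_filter_mp l l' x (Q : X) : lsubD l' -> lsub l l' ->
  sval G (chain (trl l b0 a) x) -> le G Q -> (forall t, In t (trl l' b0 a) -> sval Q t) ->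
  sval Q x.
Proof.
move=> l'D ll' Gx GQ l'Q; apply: (point_chain_mp laws GQ Gx).
apply/(upeval_cval laws _ b0 sig La); apply: upeval_pos_lsub pa ll' _.
exact/(upeval_cval laws _ b0 sig La).
Qed.

Lemma approx_filter_filter : impl_filter approx_filter.
Proof.
split=> [x|x y [l1 [l1D G1]] [l2 [l2D G2]]].
  exists lnil; split => //; apply: (fgen_sub laws _ (point_filter G)).
  by case: (point_filter G).
exists (lcat l1 l2); split; first exact: lsubD_cat.
apply: contrapT => /(point_chain_sep laws) [Q [GQ l12Q Qy]]; apply: Qy.
have [_ Qmp] := point_filter Q; have l12D := lsubD_cat l1D l2D.
apply: (Qmp x); first exact: approx_filter_mp l12D (@lsub_catl _ _) G1 GQ l12Q.
exact: approx_filter_mp l12D (@lsub_catr _ _) G2 GQ l12Q.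
Qed.

Lemma approx_filter_sub x : sval G x -> approx_filter x.
Proof. by move=> Gx; exists lnil; split => //; apply: (fgen_sub laws _ (point_filter G) Gx). Qed.

Lemma approx_filter_trl l t : lsubD l -> In t (trl l b0 a) -> approx_filter t.
Proof. by move=> lD tl; exists l; split => //; apply: (fgen_mem laws (point_filter G) tl). Qed.

Lemma approx_filter_finite (n : seq B) : (forall t, In t n -> approx_filter t) ->
  exists l, lsubD l /\ forall l', lsubD l' -> lsub l l' -> forall Q : X, le G Q ->
     (forall t, In t (trl l' b0 a) -> sval Q t) -> forall t, In t n -> sval Q t.
Proof.
elim: n => [|x n IH] nA; first by exists lnil; split.
have [l1 [l1D n1]] := IH (fun t tn => nA t (or_intror tn)).
have [l2 [l2D G2]] := nA x (or_introl erefl).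
exists (lcat l1 l2); split; first exact: lsubD_cat.
move=> l' l'D ll' Q GQ l'Q t [<-|tn].
  by apply: approx_filter_mp l'D _ G2 GQ l'Q; apply: lsub_trans ll'; apply: lsub_catr.
by apply: (n1 l' l'D _ Q GQ l'Q t tn); apply: lsub_trans ll'; apply: lsub_catl.
Qed.

Lemma approx_filter_point (IHa : esakia_pos a) (M : X) :
  (forall x, approx_filter x -> sval M x) -> le G M /\ ue dval a M.
Proof.
move=> AM; split=> [x Gx|]; first by apply: AM; apply: approx_filter_sub.
apply: contrapT => /IHa [l [lD]]; apply; apply/(upeval_cval laws _ b0 sig La) => t tl.
by apply: AM; apply: approx_filter_trl tl.
Qed.

(* The two compactness steps of Esakia's lemma: a point above [G] where [a]
   holds under [dval] is obtained by Zorn's lemma from [approx_filter]. *)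
Lemma esakia_Imp_neg b : in_lang L b -> negative b -> esakia_pos a -> esakia_neg b ->
  ue dval (Imp a b) G -> exists l, lsubD l /\ ue (cval l) (Imp a b) G.
Proof.
move=> Lb nb IHa IHb Gab; apply: contrapT => noapprox.
have fails l : lsubD l -> exists Q : X, [/\ le G Q, ue (cval l) a Q & ~ ue (cval l) b Q].
  move=> lD; apply: contrapT => Qab; apply: noapprox; exists l; split => // Q GQ Qa.
  by apply: contrapT => Qb; apply: Qab; exists Q.
pose N n := exists l, lsubD l /\ n = trl l b0 b.
have [|||M [hM AM NM]] := @filter_zorn B _ N approx_filter_filter.
- move=> _ [l [lD ->]] /approx_filter_finite [l1 [l1D l1Q]].
  have [Q [GQ Qa Qb]] := fails _ (lsubD_cat lD l1D).
  apply: Qb; apply: (upeval_neg_lsub nb (@lsub_catl _ _)).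
  apply/(upeval_cval laws _ b0 sig Lb) => t tl.
  apply: (l1Q _ (lsubD_cat lD l1D) (@lsub_catr _ _) Q GQ _ t tl).
  exact/(upeval_cval laws _ b0 sig La).
- by exists (trl lnil b0 b), lnil; split.
- move=> _ _ [l1 [l1D ->]] [l2 [l2D ->]].
  exists (trl (lcat l1 l2) b0 b); first by exists (lcat l1 l2); split => //; apply: lsubD_cat.
  move=> F hF l12F t tl; apply: contrapT => Ft.
  have [M [hM FM Mt]] := prime_separation hF Ft.
  have: ~ ue (cval (lcat l1 l2)) b (exist _ M hM).
    by move/(upeval_cval laws _ b0 sig Lb) => /(_ t tl).
  apply; case: l12F => lF.
    apply: (upeval_neg_lsub nb (@lsub_catl _ _)); apply/(upeval_cval laws _ b0 sig Lb) => x xl.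
    by apply: FM; apply: lF.
  apply: (upeval_neg_lsub nb (@lsub_catr _ _)); apply/(upeval_cval laws _ b0 sig Lb) => x xl.
  by apply: FM; apply: lF.
- have [GM Ma] := approx_filter_point IHa (M := exist _ M hM) AM.
  have [l [lD Mb]] := IHb _ (Gab _ GM Ma).
  by apply: (NM (trl l b0 b)); [exists l | exact: (proj1 (upeval_cval laws l b0 sig Lb _) Mb)].
Qed.

Lemma esakia_Neg_neg : has_bneg B -> esakia_pos a ->
  ue dval (Neg a) G -> exists l, lsubD l /\ ue (cval l) (Neg a) G.
Proof.
move=> hs IHa Gna; apply: contrapT => noapprox.
have fails l : lsubD l -> exists Q : X, le G Q /\ ue (cval l) a Q.
  move=> lD; apply: contrapT => Qa; apply: noapprox; exists l; split => // Q GQ Qa'.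
  by apply: Qa; exists Q.
have [|||M [hM AM _]] := @filter_zorn B _ (fun n => n = [:: b0; bneg b0])
  approx_filter_filter.
- move=> _ -> /approx_filter_finite [l [lD lQ]].
  have [Q [GQ Qa]] := fails l lD.
  have := lQ l lD (fun _ _ => id) Q GQ (proj1 (upeval_cval laws _ b0 sig La Q) Qa).
  by move=> Qn; apply: (point_bneg laws hs (Qn b0 _) (Qn _ _)); [left | right; left].
- by exists [:: b0; bneg b0].
- by move=> _ _ -> ->; exists [:: b0; bneg b0] => // F _ [].
- have [GM Ma] := approx_filter_point IHa (M := exist _ M hM) AM.
  exact: Gna _ GM Ma.
Qed.

End Approximants.

Lemma esakia phi : in_lang L phi ->
  (positive phi -> esakia_pos phi) /\ (negative phi -> esakia_neg phi).
Proof.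
case: (sig) => _ _ sN _ _.
elim: phi => [m|a IHa b IHb|a IHa b IHb|a IHa b IHb|a IHa||] /= Lphi;
  rewrite /esakia_pos /esakia_neg /=; split => //.
- move=> _ P /existsNP [d /not_implyP [Dd Pd]].
  exists (fun n => if n == m then [:: d] else [::]); split.
    by move=> n t; case: eqP => [->|_] // [<-|[]].
  by move=> lP; apply/Pd/lP; rewrite eqxx; left.
- case/andP: Lphi => /andP [_ La] Lb /andP [pa pb] P /not_andP [na|nb].
    by have [l [lD la]] := (proj1 (IHa La)) pa P na; exists l; split=> // [[]].
  by have [l [lD lb]] := (proj1 (IHb Lb)) pb P nb; exists l; split=> // [[]].
- case/andP: Lphi => /andP [_ La] Lb /andP [na nb] P [Pa Pb].
  have [l1 [l1D l1a]] := (proj2 (IHa La)) na P Pa.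
  have [l2 [l2D l2b]] := (proj2 (IHb Lb)) nb P Pb.
  exists (lcat l1 l2); split; first exact: lsubD_cat.
  by split; [apply: upeval_neg_lsub na (@lsub_catl _ _) l1a
            | apply: upeval_neg_lsub nb (@lsub_catr _ _) l2b].
- case/andP: Lphi => /andP [_ La] Lb /andP [pa pb] P /not_orP [na nb].
  have [l1 [l1D l1a]] := (proj1 (IHa La)) pa P na.
  have [l2 [l2D l2b]] := (proj1 (IHb Lb)) pb P nb.
  exists (lcat l1 l2); split=> [|[]]; first exact: lsubD_cat.
    by move/(upeval_pos_lsub pa (@lsub_catl _ _)).
  by move/(upeval_pos_lsub pb (@lsub_catr _ _)).
- case/andP: Lphi => /andP [_ La] Lb /andP [na nb] P [Pa|Pb].
    by have [l [lD la]] := (proj2 (IHa La)) na P Pa; exists l; split=> //; left.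
  by have [l [lD lb]] := (proj2 (IHb Lb)) nb P Pb; exists l; split=> //; right.
- case/andP: Lphi => La Lb /andP [na pb] P /existsNP [Q /not_implyP [PQ /not_implyP [Qa Qb]]].
  have [l1 [l1D l1a]] := (proj2 (IHa La)) na Q Qa.
  have [l2 [l2D l2b]] := (proj1 (IHb Lb)) pb Q Qb.
  exists (lcat l1 l2); split=> [|Pab]; first exact: lsubD_cat.
  apply/l2b/(upeval_pos_lsub pb (@lsub_catr _ _))/(Pab _ PQ).
  exact: upeval_neg_lsub na (@lsub_catl _ _) l1a.
- case/andP: Lphi => La Lb /andP [pa nb] P.
  exact: (esakia_Imp_neg La pa Lb nb (proj1 (IHa La) pa) (proj2 (IHb Lb) nb)).
- case/andP: Lphi => _ La na P /existsNP [Q /not_implyP [PQ /contrapT Qa]].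
  have [l [lD la]] := (proj2 (IHa La)) na Q Qa.
  by exists l; split=> // Pna; apply: Pna PQ la.
- case/andP: Lphi => hn La pa P; rewrite -sN in hn.
  by apply: (esakia_Neg_neg La pa _ (proj1 (IHa La) pa)); rewrite /has_bneg hn.
- by move=> _ P _; exists lnil; split.
- by move=> _ P _; exists lnil; split.
Qed.

(* Monotonicity in [l] lets the approximations of conjuncts be merged. *)
Lemma ante_esakia a P : in_lang L a -> sahl_ante a -> ue dval a P ->
  exists l0, lsubD l0 /\ forall l, lsubD l -> lsub l0 l -> ue (cval l) a P.
Proof.
elim: a P => [m|a IHa b IHb|a IHa b IHb|a IHa b IHb|a IHa||] P La /orP [na|Sa] Pa;
  try by have [l [lD la]] := (proj2 (esakia La)) na P Pa;
    exists l; split=> // l' l'D ll'; apply: upeval_neg_lsub na ll' la.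
all: rewrite /= in Sa Pa; try by [|exists lnil; split].
- by exists lnil; split=> // l lD _; apply: dval_cval lD _ _ Pa.
- case/andP: La => /andP [_ La] Lb; case/andP: Sa Pa => Sa Sb [Pa Pb].
  have [l1 [l1D l1a]] := IHa P La Sa Pa; have [l2 [l2D l2b]] := IHb P Lb Sb Pb.
  exists (lcat l1 l2); split=> [|l lD l12]; first exact: lsubD_cat.
  split; [apply: l1a | apply: l2b] => //; apply: lsub_trans l12.
    exact: lsub_catl.
  exact: lsub_catr.
- case/andP: La => /andP [_ La] Lb; case/andP: Sa Pa => Sa Sb [Pa|Pb].
    by have [l1 [l1D l1a]] := IHa P La Sa Pa; exists l1; split=> // l lD l1l; left; apply: l1a.
  by have [l2 [l2D l2b]] := IHb P Lb Sb Pb; exists l2; split=> // l lD l2l; right; apply: l2b.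
Qed.

Lemma imp_esakia phi P : in_lang L phi -> sahl_imp phi -> ~ ue dval phi P ->
  exists l0, lsubD l0 /\ forall l, lsubD l -> lsub l0 l -> ~ ue (cval l) phi P.
Proof.
move=> Lphi /orP [pphi|]; first move=> /((proj1 (esakia Lphi)) pphi) [l [lD nl]].
  by exists l; split=> // l' l'D ll' /(upeval_pos_lsub pphi ll').
case: phi Lphi => [m|a b|a b|a b|a||] //= Lphi.
- case/andP: Lphi => La Lb /andP [Sa pb] /existsNP [Q /not_implyP [PQ /not_implyP [Qa Qb]]].
  have [l1 [l1D l1a]] := ante_esakia La Sa Qa.
  have [l2 [l2D l2b]] := (proj1 (esakia Lb)) pb Q Qb.
  exists (lcat l1 l2); split=> [|l lD l12 Pab]; first exact: lsubD_cat.
  apply/l2b/(upeval_pos_lsub pb (lsub_trans (@lsub_catr _ _) l12))/(Pab _ PQ).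
  by apply: l1a => //; apply: lsub_trans l12; apply: lsub_catl.
- case/andP: Lphi => _ La Sa /existsNP [Q /not_implyP [PQ /contrapT Qa]].
  have [l1 [l1D l1a]] := ante_esakia La Sa Qa.
  by exists l1; split=> // l lD l1l Pna; apply: (Pna Q PQ); apply: l1a.
Qed.

Lemma body_esakia phi P : in_lang L phi -> sahl_body phi -> ~ ue dval phi P ->
  exists l0, lsubD l0 /\ forall l, lsubD l -> lsub l0 l -> ~ ue (cval l) phi P.
Proof.
elim: phi P => [m|a IHa b IHb|a IHa b IHb|a IHa b IHb|a IHa||] P Lphi /orP [Iphi|Sphi];
  try exact: imp_esakia Lphi Iphi; rewrite /= in Sphi Lphi |- *; try by [].
- case/andP: Lphi => /andP [_ La] Lb; case/andP: Sphi => Sa Sb /not_andP [na|nb].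
    have [l [lD la]] := IHa P La Sa na.
    by exists l; split=> // l' l'D ll' [/(la l' l'D ll')].
  have [l [lD lb]] := IHb P Lb Sb nb.
  by exists l; split=> // l' l'D ll' [_ /(lb l' l'D ll')].
- case/andP: Lphi => /andP [_ La] Lb; case/andP: Sphi => Sa Sb /not_orP [na nb].
  have [l1 [l1D l1a]] := IHa P La Sa na; have [l2 [l2D l2b]] := IHb P Lb Sb nb.
  exists (lcat l1 l2); split=> [|l lD l12 [Pa|Pb]]; first exact: lsubD_cat.
    by apply: (l1a l lD _ Pa); apply: lsub_trans l12; apply: lsub_catl.
  by apply: (l2b l lD _ Pb); apply: lsub_trans l12; apply: lsub_catr.
Qed.

End Esakia.

Lemma In_nth_index (T : Type) (x0 : T) (s : seq T) t :
  In t s -> exists i, i < size s /\ nth x0 s i = t.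
Proof.
elim: s => [|x s IH] //= [<-|/IH [i [si <-]]]; first by exists 0.
by exists i.+1.
Qed.

Lemma In_nth (T : Type) (x0 : T) (s : seq T) i : i < size s -> In (nth x0 s i) s.
Proof. by elim: s i => [|x s IH] [|i] //= si; [left | right; apply: IH]. Qed.

Lemma In_mem (T : eqType) (x : T) (s : seq T) : x \in s -> In x s.
Proof. by elim: s => [|y s IH] //=; rewrite in_cons => /orP [/eqP ->|/IH]; [left | right]. Qed.

Lemma In_filter (T : Type) (p : pred T) (s : seq T) x :
  In x [seq y <- s | p y] <-> In x s /\ p x.
Proof.
elim: s => [|y s IH] /=; first by split=> // [[]].
case py: (p y) => /=; rewrite IH; split.
- by case=> [<-|[xs px]]; split => //; [left | right].
- by case=> [[<-|xs] px]; [left | right].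
- by case=> xs px; split => //; right.
- by case=> [[yx|xs] px] //; move: py; rewrite yx px.
Qed.

Lemma leq_sumn_In (T : Type) (f : T -> nat) (s : seq T) x : In x s -> f x <= sumn (map f s).
Proof.
elim: s => [|y s IH] //= [<-|/IH fx]; first exact: leq_addr.
exact: leq_trans fx (leq_addl _ _).
Qed.

Lemma logn_copy m j : logn 2 (copy m j) = m.
Proof.
rewrite /copy lognM ?expn_gt0 ?addn1 // pfactorK // logn_coprime ?addn0 //.
by rewrite coprime2n /= mul2n odd_double.
Qed.

Lemma copy_neq0 m j : copy m j != 0.
Proof. by rewrite /copy muln_eq0 expn_eq0 addn1. Qed.

(* [decode x0 l] sends the copy x_m^j of the variable [m] to the [j]-th item
   of [l m], and every other variable to [x0] or to an item of some [l m]. *)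
Definition decode (T : Type) (x0 : T) (l : nat -> seq T) (n : nat) : T :=
  nth x0 (l (logn 2 n)) ((n %/ 2 ^ logn 2 n) %/ 2).-1.

Lemma decode_copy (T : Type) (x0 : T) l m j : decode x0 l (copy m j) = nth x0 (l m) j.-1.
Proof. by rewrite /decode logn_copy /copy mulKn ?expn_gt0 //; congr nth; lia. Qed.

Fixpoint var_bound (phi : fm) : nat :=
  match phi with
  | Var m => m.+1
  | And a b | Or a b | Imp a b => maxn (var_bound a) (var_bound b)
  | Neg a => var_bound a
  | Zero | One => 0
  end.

Lemma occurs_var_bound phi m : occurs m phi -> m < var_bound phi.
Proof.
elim: phi => [n|a IHa b IHb|a IHa b IHb|a IHa b IHb|a IHa||] //=;
  try (by move/eqP ->);
  by case/orP => [/IHa /leq_trans|/IHb /leq_trans]; apply; rewrite ?leq_maxl ?leq_maxr.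
Qed.

Lemma occurs_var_bound_seq (ps : seq fm) phi : In phi ps ->
  forall m, occurs m phi -> m < foldr maxn 0 (map var_bound ps).
Proof.
elim: ps => [|p ps IH] //= [<-|/IH psm] m.
  by move/occurs_var_bound/leq_trans; apply; apply: leq_maxl.
by move/psm/leq_trans; apply; apply: leq_maxr.
Qed.

Lemma seq_choice (T U : Type) (R : T -> U -> Prop) (Q : U -> Prop) (xs : seq T) :
  (forall x, In x xs -> exists2 y, R x y & Q y) ->
  exists ys : seq U, (forall y, In y ys -> Q y) /\ forall x, In x xs -> exists2 y, In y ys & R x y.
Proof.
elim: xs => [|x xs IH] xsRQ; first by exists [::].
have [y Rxy Qy] := xsRQ x (or_introl erefl).
have [ys [ysQ xsys]] := IH (fun x' x'xs => xsRQ x' (or_intror x'xs)).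
exists (y :: ys); split=> [y' [<-|/ysQ] //|x' [<-|/xsys [y' y'ys Rx'y']]].
  by exists y => //; left.
by exists y' => //; right.
Qed.

Section Refutation.
Variables (L : lang) (B : lalg) (laws : impl_laws B) (sig : has_sig L B).
Local Notation X := (filt_star B).
Local Notation le := (@filt_le B).
Local Notation ue := (upeval le).

(* The valuation generated by finitely many points is [dval] of the
   intersections of these points, because meet-irreducible filters are prime
   for finite intersections. *)
Lemma dval_points (R : seq (nat * X)) m (P : X) :
  dval (fun m d => forall G : X, In (m, G) R -> sval G d) m P <->
  exists G, In (m, G) R /\ le G P.
Proof.
split; last by move=> [G [mG GP]] d Dd; apply: GP; apply: Dd.
move=> DP; apply: contrapT => nG.
pose Gs := [seq sval p.2 | p <- [seq p <- R | p.1 == m]].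
have [||d [Gsd Pd]] := meet_irr_avoid_meet laws (proj2_sig P) (Gs := Gs).
- by move=> G /In_map [p [_ ->]]; apply: point_filter.
- move=> G /In_map [p [/In_filter [pR /eqP pm] ->]].
  apply: contrapT => Gsub; apply: nG; exists p.2; split.
    by rewrite -pm; case: p pR {pm Gsub}.
  by move=> x px; apply: contrapT => Px; apply: Gsub; exists x.
- apply: Pd; apply: DP => G mG; apply: Gsd; apply/In_map; exists (m, G); split => //.
  exact/In_filter.
Qed.

Lemma bodies_esakia D (b0 : B) (P : X) ps :
  (forall phi, In phi ps -> in_lang L phi) -> (forall phi, In phi ps -> sahl_body phi) ->
  (forall phi, In phi ps -> ~ ue (dval D) phi P) ->
  exists l0, lsubD D l0 /\ forall l, lsubD D l -> lsub l0 l ->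
    forall phi, In phi ps -> ~ ue (cval l) phi P.
Proof.
elim: ps => [|p ps IH] Lps Sps nps; first by exists (lnil B); split.
have [l1 [l1D l1p]] := body_esakia laws sig b0 (Lps p (or_introl erefl))
  (Sps p (or_introl erefl)) (nps p (or_introl erefl)).
have [l2 [l2D l2ps]] := IH (fun q h => Lps q (or_intror h)) (fun q h => Sps q (or_intror h))
  (fun q h => nps q (or_intror h)).
exists (lcat l1 l2); split=> [|l lD l12 phi [<-|phips]]; first exact: lsubD_cat.
  by apply: l1p => //; apply: lsub_trans l12; apply: lsub_catl.
by apply: l2ps => //; apply: lsub_trans l12; apply: lsub_catr.
Qed.

Lemma cval_trunc l N phi (P : X) : (forall m, occurs m phi -> m < N) ->
  ue (cval l) phi P <-> ue (cval (fun m => if m < N then l m else [::])) phi P.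
Proof. by move=> phiN; apply: upeval_agree => m /phiN mN Q; rewrite /cval mN. Qed.

Lemma cval_decode l one k m (P : X) : size (l m) < k -> sval P one ->
  cval (fun m => [seq decode one l (copy m j) | j <- iota 1 k]) m P <-> cval l m P.
Proof.
move=> lk P1; split=> lP t.
  move=> /(In_nth_index one) [i [il <-]]; apply: lP; apply/In_map.
  exists i.+1; split; last by rewrite decode_copy.
  by apply: In_mem; rewrite mem_iota add1n ltnS /=; apply: leq_trans il (ltnW lk).
move=> /In_map [j [_ ->]]; rewrite decode_copy.
by case: (ltnP j.-1 (size (l m))) => jl; [apply/lP/In_nth | rewrite nth_default].
Qed.

Definition A_valid (Q : quasi) :=
  forall k, 0 < k -> forall (e : nat -> B) (b : B), beval e (A_form Q k) = aimp b b.

(* A point refuting every [phi_i] under a valuation [cval l] contradicts the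
   validity of [A_form Q k], for [k] exceeding the lengths of the lists [l m]:
   evaluate the copies x_m^j as the items of [l m] and [y] as a common upper
   bound of witnesses of the refutations. *)
Lemma A_valid_cval Q (F0 : X) l : sahlqvist_quasi_in L Q -> A_valid Q ->
  ~ forall phi, In phi (q_phis Q) -> ~ ue (cval l) phi F0.
Proof.
case=> _ _ _ _ QL valid fails.
have Lps phi : In phi (q_phis Q) -> in_lang L phi by apply: all_In QL.
pose N := foldr maxn 0 (map var_bound (q_phis Q)).
pose lN m := if m < N then l m else [::].
pose k := (sumn [seq size (l m) | m <- iota 0 N]).+1.
have lNk m : size (lN m) < k.
  rewrite /lN; case: ifP => // mN; rewrite ltnS.
  by apply: (leq_sumn_In (fun m => size (l m))); apply: In_mem; rewrite mem_iota.
have [b0 _] := point_proper F0.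
pose e0 := decode (aimp b0 b0) lN.
pose lk m := [seq e0 (copy m j) | j <- iota 1 k].
have witness phi : In phi (q_phis Q) ->
    exists2 t, In t (trl lk (e0 (copy 0 1)) phi) & ~ sval F0 t.
  move=> Qphi; apply: contrapT => /forall2NP nt; apply: (fails phi Qphi).
  apply/(@cval_trunc l _ phi F0 (occurs_var_bound_seq Qphi)).
  apply/(@upeval_agree _ _ phi (cval lk)) => [m _ P|].
    by apply: cval_decode (lNk m) _; case: (point_filter P).
  apply/(upeval_cval laws lk (e0 (copy 0 1)) sig (Lps _ Qphi)) => t tphi.
  by case: (nt t) => // /contrapT.
have [ts [tsF0 tsphi]] := seq_choice witness.
have [c [F0c tsc]] := meet_irr_common_bound laws (proj2_sig F0) tsF0.
pose e n := if n == 0 then c else e0 n.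
have e_copy m j : e (copy m j) = e0 (copy m j) by rewrite /e (negbTE (copy_neq0 m j)).
have F0A : sval F0 (beval e (A_form Q k)) by rewrite (valid k _ e c) //; case: (point_filter F0).
apply: F0c; rewrite beval_A_form in F0A; apply: (fgen_mp laws (point_filter F0) _ F0A).
move=> x /In_map [phi [Qphi ->]].
rewrite (beval_trk _ _ (ltn0Sn _)) e_copy.
have -> : (fun m => [seq e (copy m j) | j <- iota 1 k]) = lk.
  by apply: funext => m; apply: eq_map => j; apply: e_copy.
have [t tts tphi] := tsphi phi Qphi.
exact: (fgen_imp laws (point_filter F0) tphi (tsc t tts)).
Qed.

(* Sahlqvist: a point refuting every [phi_i] under an upset valuation does so
   under the valuation generated by finitely many points (minimal valuation),
   hence under [dval] of their intersections, hence (Esakia) under some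
   [cval l]. *)
Lemma A_valid_upeval Q (v : nat -> X -> Prop) (F0 : X) :
  sahlqvist_quasi_in L Q -> A_valid Q -> (forall n, upset le (v n)) ->
  ~ forall phi, In phi (q_phis Q) -> ~ ue v phi F0.
Proof.
move=> hq valid vup fails; case: (hq) => _ _ _ QS QL.
have Lps phi : In phi (q_phis Q) -> in_lang L phi by apply: all_In QL.
have Sps phi : In phi (q_phis Q) -> sahl_body phi by apply: all_In QS.
have [R [Rv Rfails]] := bodies_min_support Sps fails.
pose D m d := forall G : X, In (m, G) R -> sval G d.
have Dfails phi : In phi (q_phis Q) -> ~ ue (dval D) phi F0.
  move=> Qphi; rewrite (@upeval_agree _ _ phi _ (fun m P => exists G, In (m, G) R /\ le G P)).
    apply: Rfails => // [m P [G [mG GP]]|[m G] mG]; last by exists G; split.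
    by apply: vup GP _; apply: (Rv (m, G)).
  by move=> m _ P; apply: dval_points.
have [b0 _] := point_proper F0.
have [l [lD lfails]] := bodies_esakia b0 Lps Sps Dfails.
exact: A_valid_cval hq valid (lfails l lD (fun _ _ => id)).
Qed.

End Refutation.

Section CanonicalRefutation.
Variables (L : lang) (B : lalg) (laws : impl_laws B) (sig : has_sig L B).

(* A point [G] containing the values of all [phi_i^k -> y] but not that of [y]
   refutes [Q] under the valuation sending [y] to the upset of [G], [z] to the
   complement of the downset of [G], and each other variable [m] to [cval] of
   the values of its copies. *)
Lemma trk_refutes_sat_tr Q k (e : nat -> B) (G : filt_star B) :
  sahlqvist_quasi_in L Q -> 0 < k ->
  (forall phi, In phi (q_phis Q) -> sval G (chain (map (beval e) (trk k phi)) (e 0))) ->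
  ~ sval G (e 0) -> ~ sat_tr (@filt_le B) Q.
Proof.
case=> _ yz occ _ QL k_gt0 Gphi Gy sat.
pose lk m := [seq e (copy m j) | j <- iota 1 k].
pose v n P := if n == q_y Q then filt_le G P
              else if n == q_z Q then ~ filt_le P G else cval lk n P.
have vup n : upset (@filt_le B) (v n).
  move=> P P' PP'; rewrite /v; case: ifP => _; first by move=> GP x /GP /PP'.
  case: ifP => _; first by move=> PG P'G; apply: PG => x /PP' /P'G.
  by move=> Pl t /Pl /PP'.
have vy P : v (q_y Q) P = filt_le G P by rewrite /v eqxx.
have vz P : v (q_z Q) P = ~ filt_le P G by rewrite /v eq_sym (negbTE yz) eqxx.
suff hyp : forall phi, In phi (q_phis Q) ->
    forall P, upeval (@filt_le B) v phi P /\ v (q_y Q) P -> v (q_z Q) P.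
  by have := sat v vup hyp G; rewrite vy vz => /(_ (fun _ => id)); apply.
move=> phi Qphi P [Pphi]; rewrite vy vz => GP PG.
have /andP [nyphi nzphi] := all_In occ Qphi.
have vl m : occurs m phi -> forall P', v m P' <-> cval lk m P'.
  move=> mphi P'; rewrite /v.
  have -> : (m == q_y Q) = false by apply/negbTE; apply: contraNneq nyphi => <-.
  by have -> : (m == q_z Q) = false by apply/negbTE; apply: contraNneq nzphi => <-.
have := proj1 (upeval_agree (@filt_le B) vl P) Pphi.
move/(upeval_cval laws lk (e (copy 0 1)) sig (all_In QL Qphi)) => Ptrl.
apply: Gy; apply: PG; apply: (fgen_mp laws (point_filter P) Ptrl).
by rewrite -beval_trk //; apply: GP; apply: Gphi.
Qed.

End CanonicalRefutation.

Definition someif (b : bool) (T : Type) (f : b = true -> T) : option T :=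
  (if b as b' return b = b' -> option T then fun e => Some (f e) else fun _ => None)
    (erefl b).

Lemma isSome_someif (b : bool) T (f : b = true -> T) : isSome (someif f) = b.
Proof. by rewrite /someif; case: b f. Qed.

Lemma someifP (b : bool) T (f : b = true -> T) g : someif f = Some g -> exists e, g = f e.
Proof. by rewrite /someif; case: b f => f //= [<-]; exists erefl. Qed.

Section SubreductAlgebra.
Variables (L : lang) (H : heyting) (S : H -> Prop) (hS : subreduct L S).

Lemma subreduct_inh : exists a, S a. Proof. by case: hS. Qed.

Lemma subreduct_imp a b : S a -> S b -> S (himp a b).
Proof. by case: hS => _ [imp _]; apply: imp. Qed.

Lemma subreduct_meet : has_and L -> forall a b, S a -> S b -> S (hmeet a b).
Proof. by case: hS => _ [_ [meet _]]. Qed.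

Lemma subreduct_join : has_or L -> forall a b, S a -> S b -> S (hjoin a b).
Proof. by case: hS => _ [_ [_ [join _]]]. Qed.

Lemma subreduct_neg : has_neg L -> forall a, S a -> S (himp a (hbot H)).
Proof. by case: hS => _ [_ [_ [_ [neg _]]]]. Qed.

Lemma subreduct_bot : has_zero L -> S (hbot H).
Proof. by case: hS => _ [_ [_ [_ [_ [bot _]]]]]. Qed.

Lemma subreduct_top : has_one L -> S (htop H).
Proof. by case: hS => _ [_ [_ [_ [_ [_ top]]]]]. Qed.

Definition sub_alg : lalg := @LAlg {x : H | S x}
  (fun a b => exist _ (himp (sval a) (sval b)) (subreduct_imp (proj2_sig a) (proj2_sig b)))
  (someif (fun e => fun a b =>
     exist _ (hmeet (sval a) (sval b)) (subreduct_meet e (proj2_sig a) (proj2_sig b))))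
  (someif (fun e => fun a b =>
     exist _ (hjoin (sval a) (sval b)) (subreduct_join e (proj2_sig a) (proj2_sig b))))
  (someif (fun e => fun a =>
     exist _ (himp (sval a) (hbot H)) (subreduct_neg e (proj2_sig a))))
  (someif (fun e => exist _ (hbot H) (subreduct_bot e)))
  (someif (fun e => exist _ (htop H) (subreduct_top e))).

(* [sub_alg] is in V(A) as the image of the first power A^unit. *)
Definition sub_proj (x : unit -> H) : sub_alg :=
  match pselect (S (x tt)) with
  | left Sx => exist _ (x tt) Sx
  | right _ => exist _ (sval (cid subreduct_inh)) (proj2_sig (cid subreduct_inh))
  end.

Lemma sub_proj_eq x (y : sub_alg) : sval y = x tt -> sub_proj x = y.
Proof.
case: y => y Sy /= yx; rewrite /sub_proj; case: pselect => [Sx|[]]; last by rewrite -yx.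
by apply: eq_exist.
Qed.

Lemma sub_proj_val x : S (x tt) -> sval (sub_proj x) = x tt.
Proof. by move=> Sx; rewrite (@sub_proj_eq x (exist _ (x tt) Sx)). Qed.

Lemma sub_proj_imp x y : S (x tt) -> S (y tt) ->
  S (himp (x tt) (y tt)) /\ sub_proj (fun i => himp (x i) (y i)) = aimp (sub_proj x) (sub_proj y).
Proof.
move=> Sx Sy; split; first exact: subreduct_imp.
by apply: sub_proj_eq; rewrite /= !sub_proj_val.
Qed.

Lemma sub_proj_meet g : aand sub_alg = Some g -> forall x y, S (x tt) -> S (y tt) ->
  S (hmeet (x tt) (y tt)) /\ sub_proj (fun i => hmeet (x i) (y i)) = g (sub_proj x) (sub_proj y).
Proof.
move=> gS; have [e ->] := @someifP (has_and L) _ _ g gS => x y Sx Sy.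
split; first exact: subreduct_meet.
by apply: sub_proj_eq; rewrite /= !sub_proj_val.
Qed.

Lemma sub_proj_join g : aor sub_alg = Some g -> forall x y, S (x tt) -> S (y tt) ->
  S (hjoin (x tt) (y tt)) /\ sub_proj (fun i => hjoin (x i) (y i)) = g (sub_proj x) (sub_proj y).
Proof.
move=> gS; have [e ->] := @someifP (has_or L) _ _ g gS => x y Sx Sy.
split; first exact: subreduct_join.
by apply: sub_proj_eq; rewrite /= !sub_proj_val.
Qed.

Lemma sub_proj_neg g : aneg sub_alg = Some g -> forall x, S (x tt) ->
  S (himp (x tt) (hbot H)) /\ sub_proj (fun i => himp (x i) (hbot H)) = g (sub_proj x).
Proof.
move=> gS; have [e ->] := @someifP (has_neg L) _ _ g gS => x Sx.
split; first exact: subreduct_neg.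
by apply: sub_proj_eq; rewrite /= !sub_proj_val.
Qed.

Lemma sub_proj_bot d : azero sub_alg = Some d -> S (hbot H) /\ sub_proj (fun _ => hbot H) = d.
Proof.
move=> dS; have [e ->] := @someifP (has_zero L) _ _ d dS.
by split; [exact: subreduct_bot | apply: sub_proj_eq].
Qed.

Lemma sub_proj_top d : aone sub_alg = Some d -> S (htop H) /\ sub_proj (fun _ => htop H) = d.
Proof.
move=> dS; have [e ->] := @someifP (has_one L) _ _ d dS.
by split; [exact: subreduct_top | apply: sub_proj_eq].
Qed.

Lemma sub_alg_in_variety : in_variety L S sub_alg.
Proof.
split; first by split; rewrite /= isSome_someif.
exists unit, (fun x => S (x tt)), sub_proj.
split; first by move=> x Sx [].
split; first exact: sub_proj_imp.
split; first exact: sub_proj_meet.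
split; first exact: sub_proj_join.
split; first exact: sub_proj_neg.
split; first exact: sub_proj_bot.
split; first exact: sub_proj_top.
by move=> b; exists (fun _ => sval b); [apply: proj2_sig | apply: sub_proj_eq].
Qed.

Lemma sub_alg_beval phi (v : nat -> H) (Sv : forall n, S (v n)) : expressible sub_alg phi ->
  sval (beval (fun n => exist _ (v n) (Sv n) : sub_alg) phi) = heval v phi.
Proof.
move=> Ephi.
have -> : (fun n => exist _ (v n) (Sv n) : sub_alg) = (fun n => sub_proj (fun _ => v n)).
  by apply: funext => n; apply/esym/sub_proj_eq.
have [Sphi <-] := hom_beval sub_proj_imp sub_proj_join sub_proj_neg sub_proj_bot Ephi
  (x := fun n _ => v n) Sv.
by rewrite sub_proj_val.
Qed.

End SubreductAlgebra.

Lemma A_valid_sat_tr (L : lang) (Q : quasi) (H : heyting) (S : H -> Prop) (B : lalg) :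
  sahlqvist_quasi_in L Q -> in_variety L S B ->
  (forall theta, A_set Q theta -> sub_valid S theta) -> sat_tr (@filt_le B) Q.
Proof.
move=> hq BV valid; have laws := variety_impl_laws BV; have sig : has_sig L B by case: BV.
have AB : A_valid B Q.
  move=> k k_gt0; case: BV => _ [I [P [f [P_S [f_imp [_ [f_or [f_neg [f_zero [_ f_surj]]]]]]]]]].
  apply: (variety_valid P_S f_imp f_or f_neg f_zero f_surj).
    by case: hq => _ _ _ _ QL; apply: expressible_A_form sig QL k_gt0.
  by apply: valid; exists k.
move=> v vup hyp P Py; apply: contrapT => Pz.
apply: (A_valid_upeval laws sig hq AB vup (F0 := P)) => phi Qphi Pphi.
exact/Pz/(hyp phi Qphi P).
Qed.

Lemma sat_tr_A_valid (L : lang) (Q : quasi) (H : heyting) (S : H -> Prop) :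
  sahlqvist_quasi_in L Q -> subreduct L S ->
  (forall B : lalg, in_variety L S B -> sat_tr (@filt_le B) Q) ->
  forall theta, A_set Q theta -> sub_valid S theta.
Proof.
move=> hq hS sat _ [k k_gt0 ->] v Sv.
have BV := sub_alg_in_variety hS; set B := sub_alg hS in BV.
have laws := variety_impl_laws BV; have sig : has_sig L B by case: BV.
pose e n : B := exist _ (v n) (Sv n).
have QL : all (in_lang L) (q_phis Q) by case: hq.
have <- : sval (beval e (A_form Q k)) = heval v (A_form Q k).
  exact: sub_alg_beval (expressible_A_form sig QL k_gt0).
apply: contrapT => nA.
have top_filter : impl_filter (fun b : B => sval b = htop H).
  split=> [a|a b /= ->]; first exact: himp_refl.
  exact: himpT_top.
have [M [hM topM]] := prime_separation top_filter nA.
rewrite beval_A_form => /(point_chain_sep laws (P := exist _ M hM)) [G [_ Gphi Gy]].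
apply: (trk_refutes_sat_tr laws sig hq k_gt0 _ Gy (sat B BV)) => phi Qphi.
by apply: Gphi; apply/In_map; exists phi.
Qed.

Theorem lemma9p4 (L : lang) (Q : quasi) (H : heyting) (S : H -> Prop) :
  sahlqvist_quasi_in L Q ->
  subreduct L S ->
  ((forall theta, A_set Q theta -> sub_valid S theta) <->
   (forall B : lalg, in_variety L S B -> sat_tr (@filt_le B) Q)).
Proof.
move=> hq hS; split=> [valid B BV|]; first exact: A_valid_sat_tr hq BV valid.
exact: sat_tr_A_valid hq hS.
Qed.
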